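(* Let $\omega$ be a weight on $\mathbb{Z}$ and let $f \in C(\Gamma)$ have $\omega$-absolutely convergent Fourier series. If $f(z) \neq 0$ for all $z \in \Gamma$, then there exists a weight $\nu$ on $\mathbb{Z}$ such that: (a) $1/f$ has $\nu$-absolutely convergent Fourier series; (b) $\nu$ is non-constant if and only if $\omega$ is non-constant; (c) $\nu(n) \le \omega(n)$ for all $n \in \mathbb{Z}$.
   Context: $\Gamma=\{z\in\mathbb{C}:|z|=1\}$ is the unit circle and $C(\Gamma)$ the set of continuous complex-valued functions on $\Gamma$. For $f\in C(\Gamma)$ its Fourier coefficients are $\widehat f(n)=\frac{1}{2\pi}\int_{-\pi}^{\pi} f(e^{it})e^{-int}\,dt$, $n\in\mathbb{Z}$. A weight on $\mathbb{Z}$ is a map $\omega:\mathbb{Z}\to[1,\infty)$ with $\omega(m+n)\le\omega(m)\omega(n)$ for all $m,n\in\mathbb{Z}$. A function $f\in C(\Gamma)$ has $\omega$-absolutely convergent Fourier series if $\sum_{n\in\mathbb{Z}}|\widehat f(n)|\,\omega(n)<\infty$. *)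

From Stdlib Require Import Reals ZArith.
From Coquelicot Require Import Coquelicot.
Open Scope R_scope.

Definition Gamma (z : C) : Prop := Cmod z = 1.

Definition eit (t : R) : C := (cos t, sin t).

(* f : C -> C restricted to Gamma is continuous on Gamma (values off Gamma
   are irrelevant), i.e. f|_Gamma belongs to C(Gamma). *)
Definition continuous_on_Gamma (f : C -> C) : Prop :=
  forall z, Gamma z -> filterlim f (within Gamma (locally z)) (locally (f z)).

Definition fourier_coeff (f : C -> C) (n : Z) : C :=
  scal (/ (2 * PI))
    (@RInt C_R_CompleteNormedModule
       (fun t => Cmult (f (eit t)) (eit (- (IZR n * t)))) (- PI) PI).

Definition is_weight (w : Z -> R) : Prop :=
  (forall n, 1 <= w n) /\ (forall m n, w (m + n)%Z <= w m * w n).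

Definition nonconstant (w : Z -> R) : Prop := exists m n, w m <> w n.

(* sum_{n in Z} |a n| w n < infinity (nonnegative terms, split into n >= 0
   and n < 0). *)
Definition Z_summable (u : Z -> R) : Prop :=
  ex_series (fun k : nat => u (Z.of_nat k)) /\
  ex_series (fun k : nat => u (- Z.of_nat (S k))%Z).

Definition w_abs_conv (w : Z -> R) (f : C -> C) : Prop :=
  Z_summable (fun n => Cmod (fourier_coeff f n) * w n).

From Stdlib Require Import Reals ZArith Lra Lia List Classical.
From Coquelicot Require Import Coquelicot.
Open Scope R_scope.

(* Truncating omega at a level c >= 1 gives a bounded weight nu <= omega, and
   truncating at the larger of two distinct values of omega keeps nu
   non-constant.  Since nu is bounded, nu-absolute convergence of the Fourier
   series of 1/f reduces to absolute convergence, i.e. to Wiener's lemma.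

   Wiener's lemma is proved through the norm ||g||_A = sum_n |g^(n)|.  It is
   submultiplicative, because an absolutely convergent Fourier series converges
   uniformly to its function (uniqueness is shown with the kernel
   (1 + cos t)^m).  A trigonometric polynomial P with ||f - P||_A <= d and
   |f - P| <= d stays away from 0, and second differences of 1/P^m are
   O(m^2 r^m h^2), which bounds ||1/P^m||_A by O(m^2 r^m).  With D = P - f and
   d r = 1/4, the Neumann series 1/f = sum_k D^k / P^(k+1) then converges in
   ||.||_A. *)

(** * Continuity of complex-valued functions of a real variable *)

Lemma continuous_C (g : R -> C) t : continuous (fun s => fst (g s)) t ->
  continuous (fun s => snd (g s)) t -> continuous g t.
Proof.
intros H1 H2.
apply continuous_ext with (f := fun s => (fst (g s), snd (g s))).
intros s; destruct (g s); reflexivity.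
apply (continuous_comp_2 (fun s => fst (g s)) (fun s => snd (g s)) (fun a b => (a,b) : C)); auto.
intros P HP. unfold filtermap. simpl in *. revert HP. apply filter_imp. intros [a b] Hp; exact Hp.
Qed.

Lemma continuous_C_fst (g : R -> C) t : continuous g t -> continuous (fun s => fst (g s)) t.
Proof.
intros H. apply (continuous_comp g fst). exact H. destruct (g t) as [a b].
apply (continuous_fst a b).
Qed.

Lemma continuous_C_snd (g : R -> C) t : continuous g t -> continuous (fun s => snd (g s)) t.
Proof.
intros H. apply (continuous_comp g snd). exact H. destruct (g t) as [a b].
apply (continuous_snd a b).
Qed.

Lemma continuous_Rmult (f g : R -> R) t : continuous f t -> continuous g t ->
  continuous (fun s => f s * g s) t.
Proof. intros; apply (continuous_mult (K:=R_AbsRing)); auto. Qed.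

Lemma continuous_Rplus (f g : R -> R) t : continuous f t -> continuous g t ->
  continuous (fun s => f s + g s) t.
Proof. intros; apply (continuous_plus (V:=R_NormedModule)); auto. Qed.

Lemma continuous_Ropp (f : R -> R) t : continuous f t -> continuous (fun s => - f s) t.
Proof. intros; apply (continuous_opp (V:=R_NormedModule)); auto. Qed.

Lemma continuous_Rminus (f g : R -> R) t : continuous f t -> continuous g t ->
  continuous (fun s => f s - g s) t.
Proof. intros; apply continuous_Rplus; auto; apply continuous_Ropp; auto. Qed.

Lemma continuous_Cplus (g h : R -> C) t : continuous g t -> continuous h t ->
  continuous (fun s => (g s + h s)%C) t.
Proof.
intros H1 H2; apply continuous_C; simpl; apply continuous_Rplus;
 first [apply continuous_C_fst | apply continuous_C_snd]; auto.
Qed.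

Lemma continuous_Cmult (g h : R -> C) t : continuous g t -> continuous h t ->
  continuous (fun s => (g s * h s)%C) t.
Proof.
intros H1 H2; apply continuous_C; simpl;
  first [apply continuous_Rminus | apply continuous_Rplus]; apply continuous_Rmult;
  first [apply continuous_C_fst | apply continuous_C_snd]; auto.
Qed.

Lemma continuous_Copp (g : R -> C) t : continuous g t -> continuous (fun s => (- g s)%C) t.
Proof.
intros H1; apply continuous_C; simpl; apply continuous_Ropp;
 first [apply continuous_C_fst | apply continuous_C_snd]; auto.
Qed.

Lemma continuous_Cminus (g h : R -> C) t : continuous g t -> continuous h t ->
  continuous (fun s => (g s - h s)%C) t.
Proof. intros; apply continuous_Cplus; auto; apply continuous_Copp; auto. Qed.

Lemma continuous_Csqnorm (g : R -> C) t : continuous g t ->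
  continuous (fun s => fst (g s) ^ 2 + snd (g s) ^ 2) t.
Proof.
intros H. simpl. apply continuous_Rplus; apply continuous_Rmult;
  try apply continuous_Rmult; try apply continuous_const;
  first [apply continuous_C_fst | apply continuous_C_snd]; auto.
Qed.

Lemma continuous_Cinv (g : R -> C) t : continuous g t -> g t <> 0%C ->
  continuous (fun s => Cinv (g s)) t.
Proof.
intros H Hn.
assert (Hd : fst (g t) ^ 2 + snd (g t) ^ 2 <> 0).
{ intro E. apply Hn. destruct (g t) as [a b]; simpl in *.
  assert (a = 0) by nra. assert (b = 0) by nra. subst; reflexivity. }
pose proof (continuous_Csqnorm g t H) as Hc.
apply continuous_C; unfold Cinv; simpl fst; simpl snd.
- apply continuous_Rmult. apply continuous_C_fst; auto.
  apply continuous_Rinv_comp; auto.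
- apply continuous_Rmult. apply continuous_Ropp. apply continuous_C_snd; auto.
  apply continuous_Rinv_comp; auto.
Qed.

Lemma continuous_Cpow (g : R -> C) t n : continuous g t -> continuous (fun s => (g s ^ n)%C) t.
Proof.
intros H; induction n; simpl. apply continuous_const. apply continuous_Cmult; auto.
Qed.

Lemma continuous_eit (u : R -> R) t : continuous u t -> continuous (fun s => eit (u s)) t.
Proof.
intros H; apply continuous_C; unfold eit; simpl.
apply continuous_cos_comp; auto.
apply continuous_sin_comp; auto.
Qed.

Lemma C_ext (x y : C) : fst x = fst y -> snd x = snd y -> x = y.
Proof. destruct x, y; simpl; intros; subst; auto. Qed.

Lemma eit_add a b : eit (a + b) = (eit a * eit b)%C.
Proof. unfold eit; apply C_ext; simpl; [rewrite cos_plus | rewrite sin_plus]; ring. Qed.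

Lemma eit_0 : eit 0 = 1%C.
Proof. unfold eit; rewrite cos_0, sin_0; reflexivity. Qed.

Lemma Cmod_eit t : Cmod (eit t) = 1.
Proof.
unfold eit, Cmod; simpl.
pose proof (sin2_cos2 t). unfold Rsqr in H.
replace (cos t * (cos t * 1) + sin t * (sin t * 1)) with 1 by lra. apply sqrt_1.
Qed.

Lemma eit_2PI t : eit (t + 2 * PI) = eit t.
Proof.
unfold eit. pose proof (cos_period t 1) as H1. pose proof (sin_period t 1) as H2.
simpl INR in *. replace (t + 2 * 1 * PI) with (t + 2 * PI) in * by ring.
rewrite H1, H2; reflexivity.
Qed.

(** * Fourier coefficients of 2 PI-periodic functions *)

Definition chi (j : Z) (t : R) : C := eit (IZR j * t).

Definition is_cont (g : R -> C) := forall t, continuous g t.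

Definition is_periodic (g : R -> C) := forall t, g (t + 2*PI) = g t.

(* [fourier_coeff f n] is [fcoef (fun t => f (eit t)) n] by conversion. *)
Definition fcoef (g : R -> C) (n : Z) : C :=
  scal (/ (2 * PI))
    (@RInt C_R_CompleteNormedModule
       (fun t => Cmult (g t) (eit (- (IZR n * t)))) (- PI) PI).

Definition is_RInt_C (g : R -> C) a b (l : C) := @is_RInt C_R_NormedModule g a b l.

Lemma is_RInt_C_fst g a b l : is_RInt_C g a b l -> is_RInt (fun t => fst (g t)) a b (fst l).
Proof.
intros H. apply (is_RInt_fct_extend_fst (U:=R_NormedModule) (V:=R_NormedModule) g a b l H).
Qed.

Lemma is_RInt_C_snd g a b l : is_RInt_C g a b l -> is_RInt (fun t => snd (g t)) a b (snd l).
Proof.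
intros H. apply (is_RInt_fct_extend_snd (U:=R_NormedModule) (V:=R_NormedModule) g a b l H).
Qed.

Lemma is_RInt_C_pair g a b l : is_RInt (fun t => fst (g t)) a b (fst l) ->
  is_RInt (fun t => snd (g t)) a b (snd l) -> is_RInt_C g a b l.
Proof.
intros H1 H2. destruct l as [l1 l2].
apply (is_RInt_fct_extend_pair (U:=R_NormedModule) (V:=R_NormedModule) g a b l1 l2 H1 H2).
Qed.

Definition is_RInt_R (f : R -> R) a b (l : R) := @is_RInt R_NormedModule f a b l.

Lemma is_RInt_R_lincomb f g a b If Ig p q : is_RInt_R f a b If -> is_RInt_R g a b Ig ->
  is_RInt_R (fun t => p * f t + q * g t) a b (p * If + q * Ig).
Proof.
intros H1 H2.
apply (is_RInt_plus (V:=R_NormedModule) (fun t => p * f t) (fun t => q * g t)).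
apply (is_RInt_scal (V:=R_NormedModule) f a b p If H1).
apply (is_RInt_scal (V:=R_NormedModule) g a b q Ig H2).
Qed.

Lemma is_RInt_R_ext f g a b l : (forall t, f t = g t) -> is_RInt_R f a b l -> is_RInt_R g a b l.
Proof. intros E H. apply (is_RInt_ext (V:=R_NormedModule) f); auto. Qed.

Lemma is_RInt_C_ext f g a b l : (forall t, f t = g t) -> is_RInt_C f a b l -> is_RInt_C g a b l.
Proof. intros E H. apply (is_RInt_ext (V:=C_R_NormedModule) f); auto. Qed.

Lemma is_RInt_R_eq f a b l l' : l = l' -> is_RInt_R f a b l -> is_RInt_R f a b l'.
Proof. intros; subst; auto. Qed.

Lemma is_RInt_C_eq f a b l l' : l = l' -> is_RInt_C f a b l -> is_RInt_C f a b l'.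
Proof. intros; subst; auto. Qed.

Lemma is_RInt_C_scal g a b l c : is_RInt_C g a b l ->
  is_RInt_C (fun t => (c * g t)%C) a b (c * l)%C.
Proof.
intros H. pose proof (is_RInt_C_fst _ _ _ _ H) as H1. pose proof (is_RInt_C_snd _ _ _ _ H) as H2.
destruct c as [p q]. apply is_RInt_C_pair; simpl.
- eapply is_RInt_R_eq; [|eapply is_RInt_R_ext; [|apply (is_RInt_R_lincomb _ _ _ _ _ _ p (-q) H1 H2)]].
  ring. intros; simpl; ring.
- eapply is_RInt_R_eq; [|eapply is_RInt_R_ext; [|apply (is_RInt_R_lincomb _ _ _ _ _ _ p q H2 H1)]].
  ring. intros; simpl; ring.
Qed.

Lemma is_RInt_C_plus f g a b If Ig : is_RInt_C f a b If -> is_RInt_C g a b Ig ->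
  is_RInt_C (fun t => (f t + g t)%C) a b (If + Ig)%C.
Proof. intros H1 H2. apply (is_RInt_plus (V:=C_R_NormedModule) f g a b If Ig H1 H2). Qed.

Lemma is_RInt_C_const (c : C) a b : is_RInt_C (fun _ => c) a b (RtoC (b - a) * c)%C.
Proof.
pose proof (is_RInt_const (V:=C_R_NormedModule) a b c). rewrite scal_R_Cmult in H. exact H.
Qed.

Lemma is_RInt_C_unique f a b l l' : is_RInt_C f a b l -> is_RInt_C f a b l' -> l = l'.
Proof.
intros H1 H2. rewrite <- (is_RInt_unique (V:=C_R_CompleteNormedModule) f a b l H1).
apply (is_RInt_unique (V:=C_R_CompleteNormedModule) f a b l' H2).
Qed.

Lemma ex_is_RInt_C g a b : is_cont g -> exists l, is_RInt_C g a b l.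
Proof.
intros H. destruct (ex_RInt_continuous (V:=C_R_CompleteNormedModule) g a b) as [l Hl].
intros; apply H. exists l; exact Hl.
Qed.

Lemma fcoef_of_is_RInt g n I : is_RInt_C (fun t => (g t * eit (- (IZR n * t)))%C) (-PI) PI I ->
  fcoef g n = (RtoC (/ (2 * PI)) * I)%C.
Proof.
intros H. unfold fcoef. rewrite (is_RInt_unique (V:=C_R_CompleteNormedModule) _ _ _ _ H).
apply scal_R_Cmult.
Qed.

Lemma is_cont_fcoef_integrand g n : is_cont g -> is_cont (fun t => (g t * eit (- (IZR n * t)))%C).
Proof.
intros H t. apply continuous_Cmult; auto. apply continuous_eit. apply continuous_Ropp.
apply continuous_Rmult. apply continuous_const. apply continuous_id.
Qed.

Lemma fcoef_integral g n : is_cont g ->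
  exists J, is_RInt_C (fun t => (g t * eit (- (IZR n * t)))%C) (-PI) PI J /\
  fcoef g n = (RtoC (/ (2 * PI)) * J)%C.
Proof.
intros H. destruct (ex_is_RInt_C _ (-PI) PI (is_cont_fcoef_integrand g n H)) as [I HI].
exists I; split; auto. apply fcoef_of_is_RInt; auto.
Qed.

Lemma is_cont_plus f g : is_cont f -> is_cont g -> is_cont (fun t => (f t + g t)%C).
Proof. intros H1 H2 t; apply continuous_Cplus; auto. Qed.

Lemma is_cont_minus f g : is_cont f -> is_cont g -> is_cont (fun t => (f t - g t)%C).
Proof. intros H1 H2 t; apply continuous_Cminus; auto. Qed.

Lemma is_cont_mult f g : is_cont f -> is_cont g -> is_cont (fun t => (f t * g t)%C).
Proof. intros H1 H2 t; apply continuous_Cmult; auto. Qed.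

Lemma is_cont_const c : is_cont (fun _ => c).
Proof. intros t; apply continuous_const. Qed.

Lemma is_cont_scal c f : is_cont f -> is_cont (fun t => (c * f t)%C).
Proof. intros; apply is_cont_mult; auto; apply is_cont_const. Qed.

Lemma is_cont_chi j : is_cont (chi j).
Proof.
intros t; unfold chi; apply continuous_eit.
apply continuous_Rmult; [apply continuous_const|apply continuous_id].
Qed.

Lemma fcoef_plus f g n : is_cont f -> is_cont g ->
  fcoef (fun t => (f t + g t)%C) n = (fcoef f n + fcoef g n)%C.
Proof.
intros H1 H2. destruct (fcoef_integral f n H1) as [I1 [HI1 E1]].
destruct (fcoef_integral g n H2) as [I2 [HI2 E2]].
rewrite E1, E2. rewrite (fcoef_of_is_RInt _ _ (I1 + I2)). ring.
eapply is_RInt_C_ext; [|apply is_RInt_C_plus; [exact HI1 | exact HI2]]. intros; simpl; ring.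
Qed.

Lemma fcoef_scal c f n : is_cont f -> fcoef (fun t => (c * f t)%C) n = (c * fcoef f n)%C.
Proof.
intros H1. destruct (fcoef_integral f n H1) as [I1 [HI1 E1]].
rewrite E1. rewrite (fcoef_of_is_RInt _ _ (c * I1)). ring.
eapply is_RInt_C_ext; [|apply is_RInt_C_scal; exact HI1]. intros; simpl; ring.
Qed.

Lemma fcoef_ext f g n : (forall t, f t = g t) -> fcoef f n = fcoef g n.
Proof.
intros E. unfold fcoef. f_equal. apply RInt_ext. intros; rewrite E; reflexivity.
Qed.

Lemma fcoef_opp f n : is_cont f -> fcoef (fun t => (- f t)%C) n = (- fcoef f n)%C.
Proof.
intros H. rewrite (fcoef_ext _ (fun t => (-1) * f t)%C). rewrite fcoef_scal; auto. ring.
intros; ring.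
Qed.

Lemma fcoef_minus f g n : is_cont f -> is_cont g ->
  fcoef (fun t => (f t - g t)%C) n = (fcoef f n - fcoef g n)%C.
Proof.
intros H1 H2. unfold Cminus. rewrite fcoef_plus; auto. rewrite fcoef_opp; auto.
intros t; apply continuous_Copp; auto.
Qed.

Lemma norm_C_Cmod (x : C) : @norm R_AbsRing C_R_NormedModule x = Cmod x.
Proof. rewrite Cmod_norm. reflexivity. Qed.

Lemma is_RInt_C_norm_le g a b l M : a <= b -> is_RInt_C g a b l ->
  (forall t, a <= t <= b -> Cmod (g t) <= M) ->
  Cmod l <= (b - a) * M.
Proof.
intros Hab H HM. rewrite <- norm_C_Cmod.
apply (norm_RInt_le (V:=C_R_NormedModule) g (fun _ => M) a b l ((b-a)*M) Hab).
intros; rewrite norm_C_Cmod; auto. exact H.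
pose proof (is_RInt_const (V:=R_NormedModule) a b M). exact H0.
Qed.

Lemma Cmod_RtoC_mult (r : R) (z : C) : Cmod (RtoC r * z) = Rabs r * Cmod z.
Proof. rewrite Cmod_mult, Cmod_R. reflexivity. Qed.

Lemma fcoef_bound g n M : is_cont g -> (forall t, -PI <= t <= PI -> Cmod (g t) <= M) ->
  Cmod (fcoef g n) <= M.
Proof.
intros Hc HM. destruct (fcoef_integral g n Hc) as [J [HJ E]]. rewrite E, Cmod_RtoC_mult.
pose proof PI_RGT_0.
assert (Cmod J <= (PI - - PI) * M).
{ apply (is_RInt_C_norm_le _ (-PI) PI _ _ ltac:(lra) HJ). intros t Ht. rewrite Cmod_mult, Cmod_eit.
  rewrite Rmult_1_r; auto. }
rewrite Rabs_right. 2: { apply Rle_ge, Rlt_le, Rinv_0_lt_compat; lra. }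
replace M with (/ (2 * PI) * ((PI - - PI) * M)) by (field; lra).
apply Rmult_le_compat_l; auto. left; apply Rinv_0_lt_compat; lra.
Qed.

Lemma sin_IZR_PI k : sin (IZR k * PI) = 0.
Proof. apply sin_eq_0_1. exists k; reflexivity. Qed.

Lemma is_RInt_chi (k : Z) :
  is_RInt_C (fun t => eit (IZR k * t)) (-PI) PI (if Z.eq_dec k 0 then RtoC (2 * PI) else 0%C).
Proof.
destruct (Z.eq_dec k 0) as [->|Hk].
- eapply is_RInt_C_ext; [|eapply is_RInt_C_eq; [|apply (is_RInt_C_const 1%C)]].
  intros t; simpl. rewrite Rmult_0_l, eit_0. reflexivity.
  apply C_ext; simpl; ring.
- assert (Hk' : IZR k <> 0) by (apply not_0_IZR; auto).
  apply is_RInt_C_pair; simpl.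
  + eapply is_RInt_R_eq; [|apply (is_RInt_derive (V:=R_CompleteNormedModule) (fun t => sin (IZR k * t) / IZR k))].
    * simpl. unfold minus, plus, opp; simpl. replace (IZR k * - PI) with (- (IZR k * PI)) by ring.
      rewrite sin_neg, sin_IZR_PI. field; auto.
    * intros x _. auto_derive; auto. field; auto.
    * intros x _. apply continuous_cos_comp.
      apply continuous_Rmult; [apply continuous_const|apply continuous_id].
  + eapply is_RInt_R_eq; [|apply (is_RInt_derive (V:=R_CompleteNormedModule) (fun t => - cos (IZR k * t) / IZR k))].
    * simpl. unfold minus, plus, opp; simpl. replace (IZR k * - PI) with (- (IZR k * PI)) by ring.
      rewrite cos_neg. field; auto.
    * intros x _. auto_derive; auto. field; auto.
    * intros x _. apply continuous_sin_comp.
      apply continuous_Rmult; [apply continuous_const|apply continuous_id].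
Qed.

Lemma fcoef_chi j n : fcoef (chi j) n = if Z.eq_dec j n then 1%C else 0%C.
Proof.
rewrite (fcoef_of_is_RInt _ _ (if Z.eq_dec (j - n) 0 then RtoC (2 * PI) else 0%C)).
- destruct (Z.eq_dec (j - n) 0), (Z.eq_dec j n); try lia.
  + apply C_ext; simpl; pose proof PI_RGT_0; field; lra.
  + apply C_ext; simpl; ring.
- eapply is_RInt_C_ext; [|apply is_RInt_chi]. intros t. unfold chi. rewrite <- eit_add. f_equal.
  rewrite minus_IZR. ring.
Qed.

Notation RInt_C := (@RInt C_R_CompleteNormedModule).

Lemma ex_RInt_C_cont g a b : is_cont g -> @ex_RInt C_R_NormedModule g a b.
Proof. intros H. apply (ex_RInt_continuous (V:=C_R_CompleteNormedModule)). intros; apply H. Qed.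

Lemma is_RInt_C_RInt g a b : is_cont g -> is_RInt_C g a b (RInt_C g a b).
Proof.
intros H. apply (RInt_correct (V:=C_R_CompleteNormedModule)). apply ex_RInt_C_cont; auto.
Qed.

Lemma RInt_C_ext (f g : R -> C) a b : (forall t, f t = g t) -> RInt_C f a b = RInt_C g a b.
Proof. intros E; apply RInt_ext; intros; auto. Qed.

Lemma scal_one_C (z : C) : @scal R_AbsRing C_R_NormedModule 1 z = z.
Proof. rewrite scal_R_Cmult. apply C_ext; simpl; ring. Qed.

Lemma RInt_C_translate g x : is_cont g -> is_periodic g ->
  RInt_C (fun t => g (t + x)) (-PI) PI = RInt_C g (-PI) PI.
Proof.
intros Hc Hp.
assert (E1 : RInt_C (fun t => g (t + x)) (-PI) PI = RInt_C g (1 * -PI + x) (1 * PI + x)).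
{ rewrite <- (RInt_comp_lin (V:=C_R_CompleteNormedModule) g 1 x (-PI) PI (ex_RInt_C_cont g _ _ Hc)).
  apply RInt_C_ext. intros t. rewrite scal_one_C. f_equal; ring. }
rewrite E1. replace (1 * - PI + x) with (-PI + x) by ring.
replace (1 * PI + x) with (PI + x) by ring.
assert (E2 : RInt_C g PI (PI + x) = RInt_C g (-PI) (-PI + x)).
{ replace PI with (1 * - PI + 2 * PI) at 1 by ring.
  replace (PI + x) with (1 * (- PI + x) + 2 * PI) by ring.
  rewrite <- (RInt_comp_lin (V:=C_R_CompleteNormedModule) g 1 (2*PI) (-PI) (-PI+x)).
  2:{ apply ex_RInt_C_cont; auto. }
  apply RInt_C_ext. intros t. rewrite scal_one_C.
  replace (1 * t + 2 * PI) with (t + 2 * PI) by ring.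
  rewrite Hp. reflexivity. }
rewrite <- (RInt_Chasles (V:=C_R_CompleteNormedModule) g (-PI + x) (-PI) (PI + x)); try apply ex_RInt_C_cont; auto.
rewrite <- (RInt_Chasles (V:=C_R_CompleteNormedModule) g (-PI) PI (PI + x)); try apply ex_RInt_C_cont; auto.
rewrite E2.
rewrite plus_comm. rewrite <- plus_assoc.
rewrite (RInt_Chasles (V:=C_R_CompleteNormedModule) g (-PI) (-PI+x) (-PI)); try apply ex_RInt_C_cont; auto.
rewrite RInt_point. apply plus_zero_r.
Qed.

Lemma is_periodic_mult g : is_periodic g -> forall (k : Z) s, g (s + IZR k * (2 * PI)) = g s.
Proof.
intros Hp k. induction k using Z.peano_ind; intros s.
- rewrite Rmult_0_l, Rplus_0_r; auto.
- rewrite succ_IZR.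
  replace (s + (IZR k + 1) * (2 * PI)) with ((s + IZR k * (2 * PI)) + 2 * PI) by ring.
  rewrite Hp. auto.
- rewrite <- Z.sub_1_r, minus_IZR. rewrite <- (Hp (s + (IZR k - 1) * (2 * PI))).
  replace (s + (IZR k - 1) * (2 * PI) + 2 * PI) with (s + IZR k * (2 * PI)) by ring. auto.
Qed.

Lemma is_periodic_chi j : is_periodic (chi j).
Proof.
intros t; unfold chi.
replace (IZR j * (t + 2 * PI)) with (IZR j * t + IZR j * (2 * PI)) by ring.
apply (is_periodic_mult eit eit_2PI).
Qed.

Lemma is_periodic_plus f g : is_periodic f -> is_periodic g -> is_periodic (fun t => (f t + g t)%C).
Proof. intros H1 H2 t; rewrite H1, H2; auto. Qed.

Lemma is_periodic_minus f g : is_periodic f -> is_periodic g ->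
  is_periodic (fun t => (f t - g t)%C).
Proof. intros H1 H2 t; rewrite H1, H2; auto. Qed.

Lemma is_periodic_const c : is_periodic (fun _ => c).
Proof. intros t; auto. Qed.

Lemma is_periodic_scal c f : is_periodic f -> is_periodic (fun t => (c * f t)%C).
Proof. intros H t; rewrite H; auto. Qed.

Lemma fcoef_translate g x n : is_cont g -> is_periodic g ->
  fcoef (fun t => g (t + x)) n = (eit (IZR n * x) * fcoef g n)%C.
Proof.
intros Hc Hp.
set (H := fun s => (g s * eit (- (IZR n * (s - x))))%C).
assert (HcH : is_cont H).
{ intros t; unfold H; apply continuous_Cmult; auto. apply continuous_eit.
  apply continuous_Ropp, continuous_Rmult; [apply continuous_const|].
  apply continuous_Rminus; [apply continuous_id | apply continuous_const]. }
assert (HpH : is_periodic H).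
{ intros t; unfold H. rewrite Hp. f_equal.
  replace (- (IZR n * (t + 2 * PI - x))) with (- (IZR n * (t - x)) + IZR (- n) * (2 * PI))
   by (rewrite opp_IZR; ring). apply (is_periodic_mult eit eit_2PI). }
unfold fcoef.
transitivity (scal (/ (2 * PI)) (RInt_C (fun t => H (t + x)) (-PI) PI)).
{ f_equal. apply RInt_C_ext. intros t; unfold H. f_equal. f_equal. f_equal. ring. }
rewrite RInt_C_translate; auto.
rewrite !scal_R_Cmult.
assert (E : RInt_C H (-PI) PI = (eit (IZR n * x) * RInt_C (fun t => (g t * eit (- (IZR n * t)))%C) (-PI) PI)%C).
{ apply (is_RInt_C_unique H (-PI) PI). apply is_RInt_C_RInt; auto.
  eapply is_RInt_C_ext; [|apply is_RInt_C_scal; apply is_RInt_C_RInt; apply is_cont_fcoef_integrand; auto].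
  intros t; unfold H. replace (- (IZR n * (t - x))) with (IZR n * x + - (IZR n * t)) by ring.
  rewrite eit_add. ring. }
rewrite E. ring.
Qed.

(** * Trigonometric polynomials and the Wiener norm *)

Fixpoint sumR {A} (f : A -> R) (l : list A) : R :=
  match l with nil => 0 | x :: l' => f x + sumR f l' end.

Fixpoint sumC {A} (f : A -> C) (l : list A) : C :=
  match l with nil => 0%C | x :: l' => (f x + sumC f l')%C end.

Lemma sumR_le {A} (f g : A -> R) l : (forall x, In x l -> f x <= g x) -> sumR f l <= sumR g l.
Proof.
induction l; simpl; intros H. lra. pose proof (H a (or_introl eq_refl)).
assert (sumR f l <= sumR g l) by (apply IHl; auto). lra.
Qed.

Lemma sumR_nonneg {A} (f : A -> R) l : (forall x, 0 <= f x) -> 0 <= sumR f l.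
Proof. induction l; simpl; intros H. lra. pose proof (H a). pose proof (IHl H). lra. Qed.

Lemma sumR_plus {A} (f g : A -> R) l : sumR (fun x => f x + g x) l = sumR f l + sumR g l.
Proof. induction l; simpl; lra. Qed.

Lemma sumR_scal {A} (f : A -> R) c l : sumR (fun x => c * f x) l = c * sumR f l.
Proof. induction l; simpl. ring. rewrite IHl; ring. Qed.

Lemma sumR_ext {A} (f g : A -> R) l : (forall x, f x = g x) -> sumR f l = sumR g l.
Proof. induction l; simpl; intros H; auto. rewrite H, IHl; auto. Qed.

Lemma sumR_app {A} (f : A -> R) l1 l2 : sumR f (l1 ++ l2) = sumR f l1 + sumR f l2.
Proof. induction l1; simpl. ring. rewrite IHl1; ring. Qed.

Lemma sumR_comm {A B} (f : A -> B -> R) l1 l2 :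
  sumR (fun x => sumR (fun y => f x y) l2) l1 = sumR (fun y => sumR (fun x => f x y) l1) l2.
Proof.
induction l1; simpl. induction l2; simpl; auto; rewrite <- IHl2; ring.
rewrite IHl1. rewrite <- sumR_plus. reflexivity.
Qed.

Lemma sumR_map {A B} (f : B -> R) (g : A -> B) l : sumR f (map g l) = sumR (fun x => f (g x)) l.
Proof. induction l; simpl; auto. rewrite IHl; auto. Qed.

Lemma sumC_scal {A} (f : A -> C) c l : sumC (fun x => c * f x)%C l = (c * sumC f l)%C.
Proof. induction l; simpl. apply C_ext; simpl; ring. rewrite IHl; ring. Qed.

Lemma sumC_ext {A} (f g : A -> C) l : (forall x, f x = g x) -> sumC f l = sumC g l.
Proof. induction l; simpl; intros H; auto. rewrite H, IHl; auto. Qed.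

Lemma Cmod_sumC {A} (f : A -> C) l : Cmod (sumC f l) <= sumR (fun x => Cmod (f x)) l.
Proof.
induction l; simpl. rewrite Cmod_0; lra.
eapply Rle_trans; [apply Cmod_triangle|]. lra.
Qed.

Lemma sumC_map {A B} (f : B -> C) (g : A -> B) l : sumC f (map g l) = sumC (fun x => f (g x)) l.
Proof. induction l; simpl; auto. rewrite IHl; auto. Qed.

Lemma sumC_app {A} (f : A -> C) l1 l2 : sumC f (l1 ++ l2) = (sumC f l1 + sumC f l2)%C.
Proof. induction l1; simpl. apply C_ext; simpl; ring. rewrite IHl1; ring. Qed.

Lemma sumR_incl {A} (f : A -> R) (L M : list A) : NoDup L -> incl L M -> (forall x, 0 <= f x) ->
  sumR f L <= sumR f M.
Proof.
revert M. induction L as [|a L IH]; intros M HN HI Hf; simpl.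
- apply sumR_nonneg; auto.
- inversion HN; subst.
  assert (Ha : In a M) by (apply HI; left; auto).
  destruct (in_split _ _ Ha) as [M1 [M2 ->]].
  rewrite sumR_app. simpl.
  assert (sumR f L <= sumR f (M1 ++ M2)).
  { apply IH; auto. intros y Hy. assert (In y (M1 ++ a :: M2)) by (apply HI; right; auto).
    apply in_app_or in H. apply in_or_app. destruct H as [H|[H|H]]; auto. subst; contradiction. }
  rewrite sumR_app in H. lra.
Qed.

Fixpoint zball (K : nat) : list Z :=
  match K with 0 => 0%Z :: nil | S K' => Z.of_nat (S K') :: (- Z.of_nat (S K'))%Z :: zball K' end.

Lemma In_zball K n : In n (zball K) <-> (Z.abs n <= Z.of_nat K)%Z.
Proof.
induction K; simpl.
- split. intros [H|[]]; subst; simpl; lia. intros; left; lia.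
- rewrite IHK. split. intros [H|[H|H]]; lia.
  intros H. destruct (Z.eq_dec n (Z.pos (Pos.of_succ_nat K))); auto.
  destruct (Z.eq_dec n (Z.neg (Pos.of_succ_nat K))); auto. right; right; lia.
Qed.

Lemma zball_NoDup K : NoDup (zball K).
Proof.
induction K; simpl. constructor; auto. constructor.
constructor. intros [H|H]. lia. apply In_zball in H. lia.
constructor. intros H. apply In_zball in H. lia. auto.
Qed.

Lemma zball_cover (L : list Z) : exists K, incl L (zball K).
Proof.
induction L as [|a L [K HK]]. exists 0%nat. intros x [].
exists (Nat.max K (Z.abs_nat a)). intros x [Hx|Hx].
- subst. apply In_zball. lia.
- apply In_zball. apply HK in Hx. apply In_zball in Hx. lia.
Qed.

Lemma zball_mono K K' : (K <= K')%nat -> incl (zball K) (zball K').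
Proof. intros H x Hx. apply In_zball in Hx. apply In_zball. lia. Qed.

Lemma NoDup_map_Zsub (L : list Z) j : NoDup L -> NoDup (map (fun n => (n - j)%Z) L).
Proof.
induction 1; simpl; constructor; auto.
intros Hin. apply in_map_iff in Hin. destruct Hin as [y [E Hy]].
assert (y = x) by lia. subst; contradiction.
Qed.

(* A trigonometric polynomial sum_p c_p e^(i k_p t), as its list of pairs
   (c_p, k_p); frequencies may repeat. *)
Definition tpoly := list (C * Z).

Definition teval (T : tpoly) (t : R) : C := sumC (fun p => (fst p * chi (snd p) t)%C) T.

Definition tnorm (T : tpoly) : R := sumR (fun p => Cmod (fst p)) T.

Lemma is_cont_sumC {A} (F : A -> R -> C) l : (forall x, is_cont (F x)) ->
  is_cont (fun t => sumC (fun x => F x t) l).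
Proof.
intros H. induction l; simpl. apply is_cont_const. apply is_cont_plus; auto.
Qed.

Lemma is_periodic_sumC {A} (F : A -> R -> C) l : (forall x, is_periodic (F x)) ->
  is_periodic (fun t => sumC (fun x => F x t) l).
Proof.
intros H. induction l; simpl. apply is_periodic_const. apply is_periodic_plus; auto.
Qed.

Lemma is_cont_teval T : is_cont (teval T).
Proof.
unfold teval. apply (is_cont_sumC (fun p t => (fst p * chi (snd p) t)%C)).
intros; apply is_cont_scal, is_cont_chi.
Qed.

Lemma is_periodic_teval T : is_periodic (teval T).
Proof.
unfold teval. apply (is_periodic_sumC (fun p t => (fst p * chi (snd p) t)%C)).
intros; apply is_periodic_scal, is_periodic_chi.
Qed.

Lemma fcoef_zero n : fcoef (fun _ => 0%C) n = 0%C.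
Proof.
rewrite (fcoef_ext _ (fun t => 0 * chi 0 t)%C). rewrite fcoef_scal. apply C_ext; simpl; ring.
apply is_cont_chi.
intros; apply C_ext; simpl; ring.
Qed.

Lemma fcoef_sumC {A} (F : A -> R -> C) l n : (forall x, is_cont (F x)) ->
  fcoef (fun t => sumC (fun x => F x t) l) n = sumC (fun x => fcoef (F x) n) l.
Proof.
intros H. induction l; simpl. apply fcoef_zero.
rewrite fcoef_plus; auto. rewrite IHl; auto. apply (is_cont_sumC F l H).
Qed.

Lemma fcoef_chi_mul j v n : is_cont v -> fcoef (fun t => (chi j t * v t)%C) n = fcoef v (n - j).
Proof.
intros H. unfold fcoef. f_equal. apply RInt_C_ext. intros t. unfold chi.
rewrite minus_IZR. replace (- ((IZR n - IZR j) * t)) with (IZR j * t + - (IZR n * t)) by ring.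
rewrite eit_add. ring.
Qed.

Lemma fcoef_teval_mul T v n : is_cont v ->
  fcoef (fun t => (teval T t * v t)%C) n = sumC (fun p => (fst p * fcoef v (n - snd p))%C) T.
Proof.
intros H. unfold teval.
rewrite (fcoef_ext _ (fun t => sumC (fun p => fst p * (chi (snd p) t * v t)) T)%C).
2:{ intros t. induction T; simpl. apply C_ext; simpl; ring. rewrite <- IHT. ring. }
rewrite (fcoef_sumC (fun p t => (fst p * (chi (snd p) t * v t))%C)).
2:{ intros; apply is_cont_scal, is_cont_mult; auto; apply is_cont_chi. }
apply sumC_ext. intros p. rewrite fcoef_scal. rewrite fcoef_chi_mul; auto.
apply is_cont_mult; auto; apply is_cont_chi.
Qed.

(* [Anorm_le g M]: the Wiener norm sum_n |g^(n)| is at most M, phrased through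
   finite sums so that no summability has to be assumed. *)
Definition Anorm_le (g : R -> C) (M : R) := forall L, NoDup L ->
  sumR (fun n => Cmod (fcoef g n)) L <= M.

Lemma Anorm_le_teval_mul T v Mv : is_cont v -> Anorm_le v Mv ->
  Anorm_le (fun t => (teval T t * v t)%C) (tnorm T * Mv).
Proof.
intros Hc HA L HL.
eapply Rle_trans.
{ apply sumR_le. intros n _. rewrite fcoef_teval_mul; auto. apply Cmod_sumC. }
rewrite sumR_comm. unfold tnorm. rewrite Rmult_comm, <- sumR_scal.
apply sumR_le. intros p _.
rewrite (sumR_ext _ (fun n => Cmod (fst p) * Cmod (fcoef v (n - snd p)))).
2:{ intros; apply Cmod_mult. }
rewrite sumR_scal. rewrite Rmult_comm. apply Rmult_le_compat_r. apply Cmod_ge_0.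
pose proof (HA _ (NoDup_map_Zsub L (snd p) HL)). rewrite sumR_map in H. exact H.
Qed.

Definition tmul (P1 P2 : tpoly) : tpoly :=
  flat_map (fun p : C * Z =>
    map (fun q : C * Z => (Cmult (fst p) (fst q), Z.add (snd p) (snd q))) P2) P1.

Lemma teval_mul P1 P2 t : teval (tmul P1 P2) t = (teval P1 t * teval P2 t)%C.
Proof.
unfold teval, tmul. induction P1; simpl. apply C_ext; simpl; ring.
rewrite sumC_app, IHP1. rewrite sumC_map. simpl.
rewrite (sumC_ext _ (fun q => (fst a * chi (snd a) t) * (fst q * chi (snd q) t))%C).
rewrite sumC_scal. ring.
intros q. unfold chi. rewrite plus_IZR.
replace ((IZR (snd a) + IZR (snd q)) * t) with (IZR (snd a) * t + IZR (snd q) * t) by ring.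
rewrite eit_add. ring.
Qed.

(** * Uniqueness theorem *)

Lemma continuous_R_eps (G : R -> R) x : continuous G x -> forall eps, 0 < eps ->
  exists d, 0 < d /\ forall y, Rabs (y - x) < d -> Rabs (G y - G x) < eps.
Proof.
intros Hc eps He. apply continuity_pt_filterlim in Hc.
destruct (Hc eps He) as [d [Hd H]]. exists d; split; auto.
intros y Hy. destruct (Req_dec y x) as [->|Hne].
- rewrite Rminus_diag, Rabs_R0; auto.
- apply H. split. unfold D_x, no_cond; auto. exact Hy.
Qed.

Lemma continuous_R_bounded (G : R -> R) a b : a <= b -> (forall s, continuous G s) ->
  exists M, forall s, a <= s <= b -> Rabs (G s) <= M.
Proof.
intros Hab Hc. destruct (continuity_ab_maj (fun s => Rabs (G s)) a b Hab) as [x [Hx _]].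
intros c _. apply continuity_pt_filterlim. apply continuous_Rabs_comp. apply Hc.
exists (Rabs (G x)); auto.
Qed.

Lemma is_RInt_R_unique f a b l l' : is_RInt_R f a b l -> is_RInt_R f a b l' -> l = l'.
Proof.
intros H1 H2. rewrite <- (is_RInt_unique (V:=R_CompleteNormedModule) f a b l H1).
apply (is_RInt_unique (V:=R_CompleteNormedModule) f a b l' H2).
Qed.

Lemma ex_is_RInt_R f a b : (forall s, continuous f s) -> exists l, is_RInt_R f a b l.
Proof.
intros H. destruct (ex_RInt_continuous (V:=R_CompleteNormedModule) f a b) as [l Hl].
intros; apply H. exists l; exact Hl.
Qed.

Lemma is_RInt_R_lower_bound f a b l c : a <= b -> is_RInt_R f a b l ->
  (forall s, a <= s <= b -> c <= f s) -> (b - a) * c <= l.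
Proof.
intros Hab H Hf.
apply (is_RInt_le (fun _ => c) f a b _ l Hab (is_RInt_const (V:=R_NormedModule) a b c) H).
intros s Hs; apply Hf; lra.
Qed.

Lemma is_RInt_R_Chasles f a b c l1 l2 :
  is_RInt_R f a b l1 -> is_RInt_R f b c l2 -> is_RInt_R f a c (l1 + l2).
Proof. intros H1 H2. apply (is_RInt_Chasles (V:=R_NormedModule) f a b c l1 l2 H1 H2). Qed.

Lemma cos_abs_antitone x y : Rabs x <= Rabs y <= PI -> cos y <= cos x.
Proof.
intros [Hxy HyPI].
assert (Habs : forall s, cos s = cos (Rabs s)).
{ intros s. unfold Rabs; destruct (Rcase_abs s); auto. rewrite cos_neg; auto. }
rewrite (Habs x), (Habs y). pose proof (Rabs_pos x).
apply cos_decr_1; lra.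
Qed.

Lemma pow_ratio_eventually_small p q A B : 0 < q < p -> 0 < B ->
  exists m, A * q ^ m < B * p ^ m.
Proof.
intros Hqp HB.
assert (Hr : Rabs (q / p) < 1).
{ rewrite Rabs_right by (apply Rle_ge, Rlt_le, Rdiv_lt_0_compat; lra).
  apply Rmult_lt_reg_r with p; [lra|]. unfold Rdiv; rewrite Rmult_assoc, Rinv_l; lra. }
destruct (pow_lt_1_zero (q / p) Hr (B / (Rabs A + 1))) as [m Hm].
{ apply Rdiv_lt_0_compat; pose proof (Rabs_pos A); lra. }
exists m. specialize (Hm m (Nat.le_refl _)).
assert (Hpm : 0 < p ^ m) by (apply pow_lt; lra).
assert (Hqm : 0 < q ^ m) by (apply pow_lt; lra).
unfold Rdiv in Hm. rewrite Rpow_mult_distr, pow_inv, Rabs_right in Hm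
  by (apply Rle_ge, Rmult_le_pos; [lra|left; apply Rinv_0_lt_compat; lra]).
assert (HA : A <= Rabs A) by apply RRle_abs.
assert (E : q ^ m * / p ^ m * (Rabs A + 1) * p ^ m = q ^ m * (Rabs A + 1))
  by (field; lra).
assert (q ^ m * / p ^ m * (Rabs A + 1) < B * / (Rabs A + 1) * (Rabs A + 1))
  by (apply Rmult_lt_compat_r; pose proof (Rabs_pos A); lra).
replace (B * / (Rabs A + 1) * (Rabs A + 1)) with B in H by (field; pose proof (Rabs_pos A); lra).
apply Rmult_lt_compat_r with (r := p ^ m) in H; auto. rewrite E in H. nra.
Qed.

Lemma continuous_cos_pow (m : nat) s : continuous (fun s => (1 + cos s) ^ m) s.
Proof.
induction m; simpl. apply continuous_const.
apply continuous_Rmult; auto. apply continuous_Rplus; [apply continuous_const|apply continuous_cos].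
Qed.

(* The kernel (1 + cos s)^m concentrates at 0: it is at least p^m near 0 and
   at most q^m < p^m away from 0, so it detects the sign of G at 0. *)
Lemma cos_kernel_integral_pos (G : R -> R) : (forall s, continuous G s) -> 0 < G 0 ->
  exists m, forall I, is_RInt_R (fun s => (1 + cos s) ^ m * G s) (-PI) PI I -> 0 < I.
Proof.
intros Hc HG. pose proof PI_RGT_0 as HPI. pose proof PI2_3_2 as HP3.
destruct (continuous_R_eps G 0 (Hc 0) (G 0 / 2) ltac:(lra)) as [d [Hd Hdd]].
set (eta := Rmin d 1 / 2).
assert (Heta : 0 < eta /\ eta < d /\ eta <= 1/2).
{ unfold eta. pose proof (Rmin_l d 1). pose proof (Rmin_r d 1).
  assert (0 < Rmin d 1) by (apply Rmin_glb_lt; lra). lra. }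
assert (HGe : forall s, Rabs s <= eta -> G 0 / 2 <= G s).
{ intros s Hs. assert (Rabs (s - 0) < d) by (rewrite Rminus_0_r; lra).
  apply Hdd in H. apply Rabs_def2 in H. lra. }
destruct (continuous_R_bounded G (-PI) PI ltac:(lra) Hc) as [M HM].
assert (HM0 : 0 <= M) by (pose proof (HM 0 ltac:(lra)); pose proof (Rabs_pos (G 0)); lra).
set (p := 1 + cos (eta / 2)). set (q := 1 + cos eta).
assert (Hq : 1 <= q) by (unfold q; pose proof (cos_ge_0 eta ltac:(lra) ltac:(lra)); lra).
assert (Hpq : q < p).
{ unfold p, q. pose proof (cos_decreasing_1 (eta/2) eta ltac:(lra) ltac:(lra) ltac:(lra) ltac:(lra) ltac:(lra)). lra. }
destruct (pow_ratio_eventually_small p q (2 * PI * M) (eta * (G 0 / 2))) as [m Hm]; [lra|nra|].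
exists m. intros I HI.
set (F := fun s => (1 + cos s) ^ m * G s).
assert (HcF : forall s, continuous F s) by (intros s; apply continuous_Rmult; auto; apply continuous_cos_pow).
destruct (ex_is_RInt_R F (-PI) (-(eta/2)) HcF) as [I1 H1].
destruct (ex_is_RInt_R F (-(eta/2)) (eta/2) HcF) as [I2 H2].
destruct (ex_is_RInt_R F (eta/2) PI HcF) as [I3 H3].
assert (E : I = I1 + I2 + I3).
{ apply (is_RInt_R_unique F (-PI) PI). exact HI.
  apply is_RInt_R_Chasles with (eta/2); auto. apply is_RInt_R_Chasles with (-(eta/2)); auto. }
assert (Hqm : 0 <= M * q ^ m) by (apply Rmult_le_pos; [|apply pow_le]; lra).
assert (Hfar : forall s, -PI <= s <= PI -> - (M * q ^ m) <= F s).
{ intros s Hs. unfold F.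
  assert (Hk : 0 <= (1 + cos s) ^ m) by (apply pow_le; pose proof (COS_bound s); lra).
  destruct (Rle_lt_dec (Rabs s) eta) as [Hnear|Hout].
  - pose proof (HGe s Hnear). nra.
  - assert ((1 + cos s) ^ m <= q ^ m).
    { apply pow_incr. split; [pose proof (COS_bound s); lra|].
      unfold q. pose proof (cos_abs_antitone eta s). rewrite (Rabs_right eta) in H by lra.
      assert (Rabs s <= PI) by (apply Rabs_le; lra). lra. }
    pose proof (proj1 (Rabs_le_between _ _) (HM s Hs)). nra. }
assert (L1 : (-(eta/2) - -PI) * (- (M * q ^ m)) <= I1).
{ apply (is_RInt_R_lower_bound F); auto; [lra|]. intros s Hs; apply Hfar; lra. }
assert (L3 : (PI - eta/2) * (- (M * q ^ m)) <= I3).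
{ apply (is_RInt_R_lower_bound F); auto; [lra|]. intros s Hs; apply Hfar; lra. }
assert (L2 : (eta/2 - -(eta/2)) * (p ^ m * (G 0 / 2)) <= I2).
{ apply (is_RInt_R_lower_bound F); auto; [lra|]. intros s Hs. unfold F.
  assert (Hs' : Rabs s <= eta / 2) by (apply Rabs_le; lra).
  assert (Hp0 : 0 <= p) by (unfold p; pose proof (COS_bound (eta/2)); lra).
  apply Rmult_le_compat; [apply pow_le; auto|lra| |apply HGe; lra].
  apply pow_incr. split; auto. unfold p.
  pose proof (cos_abs_antitone s (eta/2)). rewrite (Rabs_right (eta/2)) in H by lra. lra. }
rewrite E. nra.
Qed.

Definition tcos : tpoly := (RtoC 1, 0%Z) :: (RtoC (/2), 1%Z) :: (RtoC (/2), (-1)%Z) :: nil.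

Fixpoint tcos_pow (m : nat) : tpoly :=
  match m with 0 => (RtoC 1, 0%Z) :: nil | S m' => tmul (tcos_pow m') tcos end.

Lemma teval_tcos s : teval tcos s = RtoC (1 + cos s).
Proof.
unfold teval, tcos, chi; simpl. rewrite Rmult_0_l, eit_0. unfold eit.
replace (-1 * s) with (- s) by ring. rewrite Rmult_1_l, cos_neg, sin_neg.
apply C_ext; simpl; field.
Qed.

Lemma teval_tcos_pow m s : teval (tcos_pow m) s = RtoC ((1 + cos s) ^ m).
Proof.
induction m; simpl.
- unfold teval, chi; simpl. rewrite Rmult_0_l, eit_0. apply C_ext; simpl; ring.
- rewrite teval_mul, IHm, teval_tcos. apply C_ext; simpl; ring.
Qed.

Lemma is_cont_translate g x : is_cont g -> is_cont (fun s => g (s + x)).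
Proof.
intros H s. apply (continuous_comp (fun s => s + x) g).
apply continuous_Rplus; [apply continuous_id|apply continuous_const].
apply H.
Qed.

Lemma fcoef_teval_mul_zero T v n : is_cont v -> (forall k, fcoef v k = 0%C) ->
  fcoef (fun t => (teval T t * v t)%C) n = 0%C.
Proof.
intros Hc H0. rewrite fcoef_teval_mul by auto.
induction T as [|p T IH]; simpl; auto. rewrite IH, H0. apply C_ext; simpl; ring.
Qed.

(* Translate and rotate so that the real part is positive at 0, then integrate
   against the positive kernel (1 + cos s)^m, a trigonometric polynomial. *)
Theorem fcoef_eq0_fun_eq0 g : is_cont g -> is_periodic g ->
  (forall n, fcoef g n = 0%C) -> forall x, g x = 0%C.
Proof.
intros Hc Hp H0 x. pose proof PI_RGT_0.
destruct (Req_dec (Cmod (g x)) 0) as [E|Hne]; [apply Cmod_eq_0; auto|exfalso].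
set (v := fun s : R => Cmult (Cconj (g x)) (g (s + x))).
assert (Hcv : is_cont v) by (apply is_cont_scal, is_cont_translate; auto).
assert (Hv0 : forall n, fcoef v n = 0%C).
{ intros n. unfold v. rewrite fcoef_scal by (apply is_cont_translate; auto).
  rewrite fcoef_translate, H0 by auto. apply C_ext; simpl; ring. }
set (G := fun s => fst (v s)).
assert (HG0 : 0 < G 0).
{ unfold G, v. rewrite Rplus_0_l. destruct (g x) as [a b]. simpl.
  destruct (Req_dec a 0), (Req_dec b 0); [exfalso; subst; apply Hne, Cmod_0|nra..]. }
destruct (cos_kernel_integral_pos G (fun s => continuous_C_fst _ _ (Hcv s)) HG0) as [m Hm].
destruct (fcoef_integral (fun s => (teval (tcos_pow m) s * v s)%C) 0
  (is_cont_mult _ _ (is_cont_teval _) Hcv)) as [J [HJ EJ]].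
rewrite fcoef_teval_mul_zero in EJ by auto.
assert (HJ0 : J = 0%C).
{ replace J with (RtoC (2 * PI) * (RtoC (/ (2 * PI)) * J))%C by (apply C_ext; simpl; field; lra).
  rewrite <- EJ. apply C_ext; simpl; ring. }
subst J. apply is_RInt_C_fst in HJ.
assert (HH : is_RInt_R (fun s => (1 + cos s) ^ m * G s) (-PI) PI 0).
{ apply (fun E => is_RInt_R_ext _ _ _ _ _ E HJ). intros s.
  rewrite teval_tcos_pow, Rmult_0_l, Ropp_0, eit_0. unfold G; simpl; ring. }
apply Hm in HH. lra.
Qed.

(** * Uniform convergence of absolutely convergent Fourier series *)

Definition fpartial (u : R -> C) (N : nat) : tpoly := map (fun j => (fcoef u j, j)) (zball N).

Definition fpartial_norm (u : R -> C) (N : nat) : R := sumR (fun j => Cmod (fcoef u j)) (zball N).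

Lemma tnorm_fpartial u N : tnorm (fpartial u N) = fpartial_norm u N.
Proof. unfold tnorm, fpartial, fpartial_norm. rewrite sumR_map. reflexivity. Qed.

Lemma fpartial_norm_le u M N : Anorm_le u M -> fpartial_norm u N <= M.
Proof. intros H. apply H, zball_NoDup. Qed.

Lemma fpartial_norm_incr u N : fpartial_norm u N <= fpartial_norm u (S N).
Proof.
unfold fpartial_norm. simpl zball at 2. simpl sumR.
pose proof (Cmod_ge_0 (fcoef u (Z.pos (Pos.of_succ_nat N)))).
pose proof (Cmod_ge_0 (fcoef u (Z.neg (Pos.of_succ_nat N)))). lra.
Qed.

Lemma zball_split N K : (N <= K)%nat -> exists D, zball K = D ++ zball N.
Proof.
intros H. induction H. exists nil; auto.
destruct IHle as [D HD]. exists (Z.of_nat (S m) :: (- Z.of_nat (S m))%Z :: D). simpl. rewrite HD.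
reflexivity.
Qed.

Lemma NoDup_app_disj {A} (l l' : list A) : NoDup (l ++ l') -> forall n, In n l -> ~ In n l'.
Proof.
induction l; simpl; intros H n Hn; [destruct Hn|]. inversion H; subst.
destruct Hn as [->|Hn]. intros Hin. apply H2. apply in_or_app; auto.
apply IHl; auto.
Qed.

Lemma Cmod_le_Rabs_sum (z : C) : Cmod z <= Rabs (fst z) + Rabs (snd z).
Proof.
unfold Cmod. rewrite <- (sqrt_Rsqr (Rabs (fst z) + Rabs (snd z))).
2:{ pose proof (Rabs_pos (fst z)); pose proof (Rabs_pos (snd z)); lra. }
apply sqrt_le_1_alt. unfold Rsqr. simpl.
pose proof (Rabs_pos (fst z)); pose proof (Rabs_pos (snd z)).
pose proof (Rsqr_abs (fst z)); pose proof (Rsqr_abs (snd z)). unfold Rsqr in *. nra.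
Qed.

Lemma Rabs_fst_Cmod (z : C) : Rabs (fst z) <= Cmod z.
Proof. pose proof (Rmax_Cmod z). pose proof (Rmax_l (Rabs (fst z)) (Rabs (snd z))). lra. Qed.

Lemma Rabs_snd_Cmod (z : C) : Rabs (snd z) <= Cmod z.
Proof. pose proof (Rmax_Cmod z). pose proof (Rmax_r (Rabs (fst z)) (Rabs (snd z))). lra. Qed.

Lemma Cmod_chi j t : Cmod (chi j t) = 1.
Proof. apply Cmod_eit. Qed.

Lemma Cmod_teval_le T t : Cmod (teval T t) <= tnorm T.
Proof.
unfold teval, tnorm. eapply Rle_trans; [apply Cmod_sumC|]. apply sumR_le. intros p _.
rewrite Cmod_mult, Cmod_chi. lra.
Qed.

Lemma teval_app P1 P2 t : teval (P1 ++ P2) t = (teval P1 t + teval P2 t)%C.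
Proof. unfold teval. apply sumC_app. Qed.

Lemma Anorm_tail_small u M : Anorm_le u M -> forall eps, 0 < eps -> exists N0, forall L, NoDup L ->
  (forall n, In n L -> ~ In n (zball N0)) -> sumR (fun n => Cmod (fcoef u n)) L <= eps.
Proof.
intros HA eps He.
destruct (ex_finite_lim_seq_incr (fpartial_norm u) M (fpartial_norm_incr u) (fun N => fpartial_norm_le u M N HA)) as [l Hl].
pose proof (is_lim_seq_incr_compare _ _ Hl (fpartial_norm_incr u)) as Hle.
apply is_lim_seq_spec in Hl. destruct (Hl (mkposreal eps He)) as [N0 HN0].
exists N0. intros L HL Hdisj.
specialize (HN0 N0 (Nat.le_refl _)). simpl in HN0.
destruct (zball_cover (L ++ zball N0)) as [K HK].
assert (HND : NoDup (L ++ zball N0)).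
{ apply NoDup_app; auto. apply zball_NoDup. }
pose proof (sumR_incl (fun n => Cmod (fcoef u n)) _ _ HND HK (fun n => Cmod_ge_0 _)).
rewrite sumR_app in H. fold (fpartial_norm u N0) in H. fold (fpartial_norm u K) in H.
pose proof (Hle K). apply Rabs_def2 in HN0. lra.
Qed.

Lemma fpartial_uniform_cauchy u M : Anorm_le u M -> forall eps, 0 < eps ->
  exists N0, forall N K, (N0 <= N)%nat -> (N <= K)%nat ->
  forall t, Cmod (teval (fpartial u K) t - teval (fpartial u N) t) <= eps.
Proof.
intros HA eps He. destruct (Anorm_tail_small u M HA eps He) as [N0 H0]. exists N0.
intros N K HN HK t. destruct (zball_split N K HK) as [D HD].
unfold fpartial. rewrite HD, map_app, teval_app.
set (tail := teval (map (fun j : Z => (fcoef u j, j)) D) t).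
replace (tail + teval (map (fun j : Z => (fcoef u j, j)) (zball N)) t
  - teval (map (fun j : Z => (fcoef u j, j)) (zball N)) t)%C with tail by (apply C_ext; simpl; ring).
unfold tail.
eapply Rle_trans; [apply Cmod_teval_le|]. unfold tnorm. rewrite sumR_map. simpl.
assert (HND : NoDup (D ++ zball N)) by (rewrite <- HD; apply zball_NoDup).
apply H0. apply (NoDup_app_remove_r _ _ HND).
intros n Hn Hin. apply (NoDup_app_disj _ _ HND n Hn). apply (zball_mono N0 N HN). auto.
Qed.

Lemma Lim_seq_cauchy_bound (c : nat -> R) eps N0 : ex_finite_lim_seq c ->
  (forall N K, (N0 <= N)%nat -> (N <= K)%nat -> Rabs (c K - c N) <= eps) ->
  forall N, (N0 <= N)%nat -> Rabs (real (Lim_seq c) - c N) <= eps.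
Proof.
intros Hex H N HN. pose proof (Lim_seq_correct' c Hex) as Hl.
apply is_lim_seq_spec in Hl.
apply le_epsilon. intros d Hd. destruct (Hl (mkposreal d Hd)) as [K0 HK0].
specialize (HK0 (Nat.max N K0) (Nat.le_max_r _ _)). simpl in HK0.
specialize (H N (Nat.max N K0) HN (Nat.le_max_l _ _)).
replace (real (Lim_seq c) - c N)
  with ((c (Nat.max N K0) - c N) - (c (Nat.max N K0) - real (Lim_seq c))) by ring.
eapply Rle_trans; [apply Rabs_triang|]. rewrite Rabs_Ropp. lra.
Qed.

Lemma ex_finite_lim_seq_cauchy (c : nat -> R) :
  (forall eps, 0 < eps -> exists N0, forall N K, (N0 <= N)%nat -> (N <= K)%nat ->
     Rabs (c K - c N) <= eps) ->
  ex_finite_lim_seq c.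
Proof.
intros H. apply ex_lim_seq_cauchy_corr. intros e.
destruct (H (e/2)) as [N0 HN0]. destruct e; simpl; lra.
exists N0. intros n m Hn Hm. destruct (Nat.le_ge_cases n m).
- pose proof (HN0 n m Hn H0). rewrite Rabs_minus_sym. destruct e; simpl in *; lra.
- pose proof (HN0 m n Hm H0). destruct e; simpl in *; lra.
Qed.

Lemma continuous_R_of_eps (f : R -> R) x :
  (forall eps, 0 < eps -> exists d, 0 < d /\ forall y, Rabs (y - x) < d -> Rabs (f y - f x) <= eps) ->
  continuous f x.
Proof.
intros H. apply continuity_pt_filterlim. intros eps He.
destruct (H (eps/2) ltac:(lra)) as [d [Hd Hy]]. exists d; split; auto.
intros y [_ Hyd]. apply Rle_lt_trans with (eps/2). apply Hy. exact Hyd. lra.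
Qed.

Section UniformLimit.

Variable s : nat -> R -> R.
Hypothesis s_uniform_cauchy : forall eps, 0 < eps -> exists N0, forall N K,
  (N0 <= N)%nat -> (N <= K)%nat -> forall t, Rabs (s K t - s N t) <= eps.

Definition ulim (t : R) : R := real (Lim_seq (fun K => s K t)).

Lemma ulim_approx eps : 0 < eps -> exists N0, forall N, (N0 <= N)%nat ->
  forall t, Rabs (ulim t - s N t) <= eps.
Proof.
intros He. destruct (s_uniform_cauchy eps He) as [N0 H0]. exists N0. intros N HN t.
apply (Lim_seq_cauchy_bound (fun K => s K t) eps N0); auto.
apply ex_finite_lim_seq_cauchy. intros e He'.
destruct (s_uniform_cauchy e He') as [N1 H1]. exists N1. intros; auto.
Qed.

Lemma continuous_ulim t : (forall N, continuous (s N) t) -> continuous ulim t.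
Proof.
intros Hs. apply continuous_R_of_eps. intros eps He.
destruct (ulim_approx (eps/3) ltac:(lra)) as [N H0].
destruct (continuous_R_eps _ t (Hs N) (eps/3) ltac:(lra)) as [d [Hd Hdd]].
exists d; split; auto. intros y Hy. specialize (Hdd y Hy).
pose proof (H0 N (Nat.le_refl _) y). pose proof (H0 N (Nat.le_refl _) t).
replace (ulim y - ulim t) with ((ulim y - s N y) + (s N y - s N t) - (ulim t - s N t)) by ring.
eapply Rle_trans; [apply Rabs_triang|]. rewrite Rabs_Ropp.
eapply Rle_trans; [apply Rplus_le_compat_r; apply Rabs_triang|]. lra.
Qed.

End UniformLimit.

Lemma fpartial_proj_cauchy u M (pr : C -> R) : Anorm_le u M ->
  (forall a b, Rabs (pr a - pr b) <= Cmod (a - b)) ->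
  forall eps, 0 < eps -> exists N0, forall N K, (N0 <= N)%nat -> (N <= K)%nat ->
  forall t, Rabs (pr (teval (fpartial u K) t) - pr (teval (fpartial u N) t)) <= eps.
Proof.
intros HA Hpr eps He. destruct (fpartial_uniform_cauchy u M HA eps He) as [N0 H0].
exists N0. intros N K HN HK t. eapply Rle_trans; [apply Hpr|]. apply H0; auto.
Qed.

Lemma Rabs_fst_sub (a b : C) : Rabs (fst a - fst b) <= Cmod (a - b).
Proof. replace (fst a - fst b) with (fst (a - b)%C) by (simpl; ring). apply Rabs_fst_Cmod. Qed.

Lemma Rabs_snd_sub (a b : C) : Rabs (snd a - snd b) <= Cmod (a - b).
Proof. replace (snd a - snd b) with (snd (a - b)%C) by (simpl; ring). apply Rabs_snd_Cmod. Qed.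

(* The sum of the Fourier series, built componentwise since [Lim_seq] is real. *)
Definition fseries u t : C :=
  (ulim (fun K t => fst (teval (fpartial u K) t)) t, ulim (fun K t => snd (teval (fpartial u K) t)) t).

Lemma fseries_approx u M : Anorm_le u M -> forall eps, 0 < eps ->
  exists N0, forall N, (N0 <= N)%nat ->
  forall t, Cmod (fseries u t - teval (fpartial u N) t) <= eps.
Proof.
intros HA eps He.
destruct (ulim_approx _ (fpartial_proj_cauchy u M fst HA Rabs_fst_sub) (eps/2) ltac:(lra)) as [N1 H1].
destruct (ulim_approx _ (fpartial_proj_cauchy u M snd HA Rabs_snd_sub) (eps/2) ltac:(lra)) as [N2 H2].
exists (Nat.max N1 N2). intros N HN t.
pose proof (H1 N ltac:(lia) t). pose proof (H2 N ltac:(lia) t).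
eapply Rle_trans; [apply Cmod_le_Rabs_sum|]. unfold fseries.
replace (fst _) with (ulim (fun K t => fst (teval (fpartial u K) t)) t - fst (teval (fpartial u N) t))
  by (simpl; ring).
replace (snd _) with (ulim (fun K t => snd (teval (fpartial u K) t)) t - snd (teval (fpartial u N) t))
  by (simpl; ring).
lra.
Qed.

Lemma is_cont_fseries u M : Anorm_le u M -> is_cont (fseries u).
Proof.
intros HA t. apply continuous_C; simpl; apply continuous_ulim.
- apply (fpartial_proj_cauchy u M fst HA Rabs_fst_sub).
- intros N. apply continuous_C_fst, is_cont_teval.
- apply (fpartial_proj_cauchy u M snd HA Rabs_snd_sub).
- intros N. apply continuous_C_snd, is_cont_teval.
Qed.

Lemma is_periodic_fseries u : is_periodic (fseries u).
Proof.
intros t. unfold fseries, ulim. f_equal; f_equal; apply Lim_seq_ext; intros K;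
rewrite is_periodic_teval; auto.
Qed.

Lemma fcoef_const1 k : fcoef (fun _ => 1%C) k = if Z.eq_dec 0 k then 1%C else 0%C.
Proof.
rewrite <- fcoef_chi. apply fcoef_ext. intros t. unfold chi. rewrite Rmult_0_l, eit_0. reflexivity.
Qed.

Lemma fcoef_teval T n :
  fcoef (teval T) n = sumC (fun p => if Z.eq_dec (snd p) n then fst p else 0%C) T.
Proof.
rewrite (fcoef_ext _ (fun t => (teval T t * 1)%C)) by (intros; ring).
rewrite fcoef_teval_mul by apply is_cont_const. apply sumC_ext. intros p.
rewrite fcoef_const1.
destruct (Z.eq_dec 0 (n - snd p)), (Z.eq_dec (snd p) n); try lia; apply C_ext; simpl; ring.
Qed.

Lemma sumC_delta_out (f : Z -> C) l n : ~ In n l ->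
  sumC (fun j => if Z.eq_dec j n then f j else 0%C) l = 0%C.
Proof.
induction l; simpl; intros H; auto.
destruct (Z.eq_dec a n). subst; tauto. rewrite IHl by tauto. apply C_ext; simpl; ring.
Qed.

Lemma sumC_delta_in (f : Z -> C) l n : NoDup l -> In n l ->
  sumC (fun j => if Z.eq_dec j n then f j else 0%C) l = f n.
Proof.
induction 1; simpl; intros H1; [destruct H1|].
destruct (Z.eq_dec x n).
- subst. rewrite sumC_delta_out by auto. apply C_ext; simpl; ring.
- destruct H1 as [H1|H1]. subst; tauto. rewrite IHNoDup by auto. apply C_ext; simpl; ring.
Qed.

Lemma fcoef_fpartial_in u N n : In n (zball N) -> fcoef (teval (fpartial u N)) n = fcoef u n.
Proof.
intros H. rewrite fcoef_teval. unfold fpartial. rewrite sumC_map. simpl.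
apply (sumC_delta_in (fun j => fcoef u j)); auto. apply zball_NoDup.
Qed.

Lemma fcoef_fpartial_out u N n : ~ In n (zball N) -> fcoef (teval (fpartial u N)) n = 0%C.
Proof.
intros H. rewrite fcoef_teval. unfold fpartial. rewrite sumC_map. simpl.
apply (sumC_delta_out (fun j => fcoef u j)); auto.
Qed.

Lemma Cminus_eq0 (a b : C) : (a - b)%C = 0%C -> a = b.
Proof.
intros E. apply C_ext; [pose proof (f_equal fst E) as H|pose proof (f_equal snd E) as H];
 simpl in H; lra.
Qed.

Lemma fcoef_fseries u M : is_cont u -> Anorm_le u M -> forall n, fcoef (fseries u) n = fcoef u n.
Proof.
intros Hc HA n. pose proof (is_cont_fseries u M HA) as Hw.
destruct (Req_dec (Cmod (fcoef (fseries u) n - fcoef u n)) 0) as [E|E].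
{ apply Cmod_eq_0 in E. apply Cminus_eq0; auto. }
exfalso. set (e := Cmod (fcoef (fseries u) n - fcoef u n)).
assert (He : 0 < e) by (pose proof (Cmod_ge_0 (fcoef (fseries u) n - fcoef u n)); unfold e in *; lra).
destruct (fseries_approx u M HA (e/2) ltac:(lra)) as [N0 H0].
set (N := Nat.max N0 (Z.abs_nat n)).
assert (HIn : In n (zball N)) by (apply In_zball; unfold N; lia).
assert (Hb : Cmod (fcoef (fun t => fseries u t - teval (fpartial u N) t)%C n) <= e/2).
{ apply fcoef_bound. apply is_cont_minus; auto. apply is_cont_teval. intros t _. apply H0. unfold N; lia. }
rewrite fcoef_minus, fcoef_fpartial_in in Hb; auto. fold e in Hb. lra. apply is_cont_teval.
Qed.

Theorem fpartial_uniform_cvg u M : is_cont u -> is_periodic u -> Anorm_le u M ->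
  forall eps, 0 < eps -> exists N0, forall N, (N0 <= N)%nat ->
  forall t, Cmod (u t - teval (fpartial u N) t) <= eps.
Proof.
intros Hc Hp HA eps He. destruct (fseries_approx u M HA eps He) as [N0 H0]. exists N0.
intros N HN t.
assert (E : u t = fseries u t).
{ assert (Z0 : (u t - fseries u t)%C = 0%C).
  { apply (fcoef_eq0_fun_eq0 (fun t => u t - fseries u t)%C).
    apply is_cont_minus; auto. apply (is_cont_fseries u M HA). apply is_periodic_minus; auto.
    apply is_periodic_fseries.
    intros n. rewrite fcoef_minus; auto. rewrite (fcoef_fseries u M Hc HA n).
    apply C_ext; simpl; ring. apply (is_cont_fseries u M HA). }
  apply Cminus_eq0; auto. }
rewrite E. apply H0; auto.
Qed.

Lemma sumR_if_filter (f : Z -> R) (P : Z -> Prop) (Pd : forall n, {P n} + {~ P n}) L :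
  sumR (fun n => if Pd n then 0 else f n) L = sumR f (filter (fun n => if Pd n then false else true) L).
Proof.
induction L; simpl; auto. destruct (Pd a); simpl; rewrite IHL; ring.
Qed.

Lemma Anorm_le_sub_fpartial u M : is_cont u -> Anorm_le u M -> forall eps, 0 < eps ->
  exists N0, forall N, (N0 <= N)%nat ->
  Anorm_le (fun t => u t - teval (fpartial u N) t)%C eps.
Proof.
intros Hc HA eps He. destruct (Anorm_tail_small u M HA eps He) as [N0 H0]. exists N0.
intros N HN L HL.
rewrite (sumR_ext _ (fun n => if in_dec Z.eq_dec n (zball N) then 0 else Cmod (fcoef u n))).
2:{ intros n. rewrite fcoef_minus; auto. 2: apply is_cont_teval. destruct (in_dec Z.eq_dec n (zball N)).
    rewrite fcoef_fpartial_in; auto. unfold Cminus; rewrite Cplus_opp_r. apply Cmod_0.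
    rewrite fcoef_fpartial_out; auto. f_equal. apply C_ext; simpl; ring. }
rewrite (sumR_if_filter _ (fun n => In n (zball N))).
apply H0. apply NoDup_filter; auto.
intros n Hn Hin. apply filter_In in Hn. destruct Hn as [_ Hn].
destruct (in_dec Z.eq_dec n (zball N)). discriminate. apply n0. apply (zball_mono N0 N HN); auto.
Qed.

(** * The Wiener norm is submultiplicative *)

Lemma sumR_const {A} (c : R) (l : list A) : sumR (fun _ => c) l = INR (length l) * c.
Proof. induction l; simpl length; [simpl; ring|]. simpl sumR. rewrite IHl, S_INR. ring. Qed.

Lemma Anorm_le_nonneg g M : Anorm_le g M -> 0 <= M.
Proof. intros H. apply (H nil). constructor. Qed.

Lemma is_cont_bounded (v : R -> C) : is_cont v -> exists S, 0 <= S /\ forall t, -PI <= t <= PI ->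
  Cmod (v t) <= S.
Proof.
intros Hc. pose proof PI_RGT_0.
destruct (continuous_R_bounded (fun s => fst (v s)) (-PI) PI ltac:(lra) (fun s => continuous_C_fst v s (Hc s))) as [B1 H1].
destruct (continuous_R_bounded (fun s => snd (v s)) (-PI) PI ltac:(lra) (fun s => continuous_C_snd v s (Hc s))) as [B2 H2].
exists (B1 + B2). split.
- pose proof (H1 0 ltac:(lra)). pose proof (H2 0 ltac:(lra)). pose proof (Rabs_pos (fst (v 0))).
  pose proof (Rabs_pos (snd (v 0))). lra.
- intros t Ht. eapply Rle_trans; [apply Cmod_le_Rabs_sum|].
  pose proof (H1 t Ht); pose proof (H2 t Ht); lra.
Qed.

Lemma Anorm_le_plus f g M1 M2 : is_cont f -> is_cont g -> Anorm_le f M1 -> Anorm_le g M2 ->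
  Anorm_le (fun t => (f t + g t)%C) (M1 + M2).
Proof.
intros Hf Hg H1 H2 L HL. eapply Rle_trans.
apply sumR_le. intros n _. rewrite fcoef_plus; auto. apply Cmod_triangle.
rewrite sumR_plus. pose proof (H1 L HL); pose proof (H2 L HL); lra.
Qed.

Lemma Anorm_le_zero : Anorm_le (fun _ => 0%C) 0.
Proof.
intros L HL. rewrite (sumR_ext _ (fun _ => 0)). rewrite sumR_const; lra.
intros n. rewrite fcoef_zero. apply Cmod_0.
Qed.

Lemma Anorm_le_sumC {A} (F : A -> R -> C) (b : A -> R) l : (forall x, is_cont (F x)) ->
  (forall x, Anorm_le (F x) (b x)) ->
  Anorm_le (fun t => sumC (fun x => F x t) l) (sumR b l).
Proof.
intros Hc HA. induction l; simpl. apply Anorm_le_zero.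
apply Anorm_le_plus; auto. apply (is_cont_sumC F l Hc).
Qed.

Lemma Anorm_le_le g M M' : M <= M' -> Anorm_le g M -> Anorm_le g M'.
Proof. intros H HA L HL. pose proof (HA L HL); lra. Qed.

Lemma Anorm_le_of_uniform_approx g B : is_cont g ->
  (forall e, 0 < e -> exists h, is_cont h /\ Anorm_le h B /\
     forall t, -PI <= t <= PI -> Cmod (g t - h t) <= e) ->
  Anorm_le g B.
Proof.
intros Hcg Happ L HL. apply le_epsilon. intros d Hd.
set (len := INR (length L)). assert (Hlen : 0 <= len) by apply pos_INR.
destruct (Happ (d / (len + 1))) as [h [Hch [HAh Hgh]]]; [apply Rdiv_lt_0_compat; lra|].
eapply Rle_trans.
{ apply sumR_le. intros n _.
  rewrite (fcoef_ext g (fun t => (g t - h t) + h t)%C) by (intros; ring).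
  rewrite fcoef_plus; [|apply is_cont_minus; auto|auto].
  eapply Rle_trans; [apply Cmod_triangle|]. apply Rplus_le_compat_r.
  apply (fcoef_bound _ n (d / (len + 1))); auto. apply is_cont_minus; auto. }
rewrite sumR_plus, sumR_const. fold len.
pose proof (HAh L HL).
assert (len * (d / (len + 1)) <= d).
{ replace (len * (d / (len + 1))) with (d * (len / (len + 1))) by (field; lra).
  rewrite <- (Rmult_1_r d) at 2. apply Rmult_le_compat_l; [lra|].
  apply Rmult_le_reg_r with (len + 1); [lra|]. unfold Rdiv; rewrite Rmult_assoc, Rinv_l; lra. }
lra.
Qed.

(* Replace u by a partial sum T of its Fourier series: the Wiener norm of T v
   is at most tnorm T * Mv <= Mu * Mv, and T v is uniformly close to u v. *)
Theorem Anorm_le_mul u v Mu Mv : is_cont u -> is_periodic u -> Anorm_le u Mu ->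
  is_cont v -> Anorm_le v Mv -> Anorm_le (fun t => (u t * v t)%C) (Mu * Mv).
Proof.
intros Hcu Hpu HAu Hcv HAv.
pose proof (Anorm_le_nonneg v Mv HAv) as HMv.
destruct (is_cont_bounded v Hcv) as [Sv [HSv HSvb]].
apply Anorm_le_of_uniform_approx; [apply is_cont_mult; auto|]. intros e He.
destruct (fpartial_uniform_cvg u Mu Hcu Hpu HAu (e / (Sv + 1))) as [N HN];
  [apply Rdiv_lt_0_compat; lra|].
set (T := fpartial u N). exists (fun t => (teval T t * v t)%C). split; [|split].
- apply is_cont_mult; auto. apply is_cont_teval.
- apply (Anorm_le_le _ (tnorm T * Mv)); [|apply Anorm_le_teval_mul; auto].
  apply Rmult_le_compat_r; auto. unfold T. rewrite tnorm_fpartial. apply fpartial_norm_le; auto.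
- intros t Ht. replace (u t * v t - teval T t * v t)%C with ((u t - teval T t) * v t)%C by ring.
  rewrite Cmod_mult. specialize (HN N (Nat.le_refl _) t).
  apply Rle_trans with (e / (Sv + 1) * Sv).
  + apply Rmult_le_compat; try apply Cmod_ge_0; auto.
  + replace (e / (Sv + 1) * Sv) with (e * (Sv / (Sv + 1))) by (field; lra).
    rewrite <- (Rmult_1_r e) at 2. apply Rmult_le_compat_l; [lra|].
    apply Rmult_le_reg_r with (Sv + 1); [lra|]. unfold Rdiv; rewrite Rmult_assoc, Rinv_l; lra.
Qed.

Theorem Anorm_le_uniform_limit (h : nat -> R -> C) (g : R -> C) (b : nat -> R) B :
  (forall k, is_cont (h k)) -> is_cont g -> (forall k, Anorm_le (h k) (b k)) ->
  (forall K, sumR b (seq 0 K) <= B) ->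
  (forall eps, 0 < eps -> exists K, forall t, -PI <= t <= PI ->
     Cmod (g t - sumC (fun k => h k t) (seq 0 K)) <= eps) ->
  Anorm_le g B.
Proof.
intros Hch Hcg HA HB Hconv. apply Anorm_le_of_uniform_approx; auto. intros e He.
destruct (Hconv e He) as [K HK]. exists (fun t => sumC (fun k => h k t) (seq 0 K)).
split; [apply (is_cont_sumC h); auto|split; auto].
apply (Anorm_le_le _ (sumR b (seq 0 K))); auto. apply (Anorm_le_sumC h); auto.
Qed.

(** * Wiener norm bounds from second differences *)

Lemma eit_PI : eit PI = (-1)%C.
Proof. unfold eit. rewrite cos_PI, sin_PI. apply C_ext; simpl; ring. Qed.

Lemma eit_opp_PI : eit (-PI) = (-1)%C.
Proof. unfold eit. rewrite cos_neg, sin_neg, cos_PI, sin_PI. apply C_ext; simpl; ring. Qed.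

Lemma IZR_mult_PI_div_abs (n : Z) : n <> 0%Z ->
  IZR n * (PI / Rabs (IZR n)) = PI \/ IZR n * (PI / Rabs (IZR n)) = - PI.
Proof.
intros Hn. assert (IZR n <> 0) by (apply not_0_IZR; auto).
unfold Rabs; destruct (Rcase_abs (IZR n)); [right|left]; field; lra.
Qed.

Lemma is_cont_ext (f g : R -> C) : (forall t, f t = g t) -> is_cont f -> is_cont g.
Proof. intros E H t. apply (continuous_ext f); auto. Qed.

Definition diff2 (g : R -> C) (t h : R) :
  C := Cplus (Cminus (g (t + h)) (Cmult (RtoC 2) (g t))) (g (t - h)).

Lemma fcoef_diff2 g h n : is_cont g -> is_periodic g ->
  fcoef (fun t => diff2 g t h) n =
  ((eit (IZR n * h) - RtoC 2 + eit (IZR n * - h)) * fcoef g n)%C.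
Proof.
intros Hc Hp.
assert (Hc1 : is_cont (fun t => g (t + h))) by (apply is_cont_translate; auto).
assert (Hc2 : is_cont (fun t => g (t + - h))) by (apply is_cont_translate; auto).
rewrite (fcoef_ext _ (fun t => Cplus (Cminus (g (t + h)) (Cmult (RtoC 2) (g t))) (g (t + - h))))
  by (intros; unfold diff2, Rminus; reflexivity).
rewrite fcoef_plus; auto. rewrite fcoef_minus; auto. rewrite fcoef_scal; auto.
rewrite !fcoef_translate; auto. ring.
apply is_cont_scal; auto. apply is_cont_minus; auto. apply is_cont_scal; auto.
Qed.

Lemma fcoef_bound_diff2 g K n : is_cont g -> is_periodic g -> 0 <= K ->
  (forall t h, 0 < h -> Cmod (diff2 g t h) <= K * h ^ 2) ->
  n <> 0%Z -> Cmod (fcoef g n) <= K * PI ^ 2 / (4 * IZR n ^ 2).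
Proof.
intros Hc Hp HK HD Hn. pose proof PI_RGT_0.
assert (Hn' : IZR n <> 0) by (apply not_0_IZR; auto).
assert (Han : 0 < Rabs (IZR n)) by (apply Rabs_pos_lt; auto).
set (h := PI / Rabs (IZR n)).
assert (Hh : 0 < h) by (apply Rdiv_lt_0_compat; auto).
assert (HcD : is_cont (fun t => diff2 g t h)).
{ unfold diff2. apply is_cont_plus. apply is_cont_minus. apply is_cont_translate; auto. apply is_cont_scal; auto.
  apply (is_cont_ext (fun t => g (t + - h))). intros; unfold Rminus; auto.
  apply is_cont_translate; auto. }

(* With h = PI / |n| the multiplier e^(inh) - 2 + e^(-inh) of the
   coefficients of the second difference equals -4. *)
pose proof (fcoef_bound _ n (K * h ^ 2) HcD (fun t _ => HD t h Hh)) as Hb.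
rewrite fcoef_diff2 in Hb; auto.
replace (eit (IZR n * h) - RtoC 2 + eit (IZR n * - h))%C with (RtoC (-4)) in Hb.
2:{ replace (IZR n * - h) with (- (IZR n * h)) by ring. unfold h.
    destruct (IZR_mult_PI_div_abs n Hn) as [E|E]; rewrite E; [|rewrite Ropp_involutive];
    rewrite eit_PI, eit_opp_PI; apply C_ext; simpl; ring. }
rewrite Cmod_mult, Cmod_R in Hb. rewrite Rabs_left in Hb by lra.
unfold h in Hb. rewrite <- (pow2_abs (IZR n)).
assert (E : K * (PI / Rabs (IZR n)) ^ 2 = 4 * (K * PI ^ 2 / (4 * Rabs (IZR n) ^ 2))) by (field; lra).
rewrite E in Hb. lra.
Qed.

Definition coef_majorant (B c : R) (n : Z) : R := if Z.eq_dec n 0 then B else c / IZR n ^ 2.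

Lemma sumR_zball_S (f : Z -> R) K :
  sumR f (zball (S K)) = f (Z.of_nat (S K)) + (f (- Z.of_nat (S K))%Z + sumR f (zball K)).
Proof. reflexivity. Qed.

Lemma coef_majorant_nz B c k : k <> 0%Z -> coef_majorant B c k = c / IZR k ^ 2.
Proof. intros H; unfold coef_majorant; destruct (Z.eq_dec k 0); tauto. Qed.

Lemma sumR_coef_majorant B c M : 0 <= c ->
  sumR (coef_majorant B c) (zball (S M)) <= B + 2 * c * (2 - 1 / (INR M + 1)).
Proof.
intros Hc. induction M.
- simpl. unfold coef_majorant. simpl. destruct (Z.eq_dec 1 0); [lia|].
  destruct (Z.eq_dec (-1) 0); [lia|].
  destruct (Z.eq_dec 0 0); [|lia]. simpl. lra.
- rewrite sumR_zball_S.
  rewrite (coef_majorant_nz B c (Z.of_nat (S (S M)))) by lia.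
  rewrite (coef_majorant_nz B c (- Z.of_nat (S (S M)))) by lia.
  rewrite opp_IZR, <- INR_IZR_INZ. rewrite !S_INR in *.
  pose proof (pos_INR M) as HM.
  set (x := INR M + 1) in *.
  assert (Hk : c / (x + 1) ^ 2 + c / (- (x + 1)) ^ 2 <= 2 * c * (1 / x - 1 / (x + 1))).
  { replace (c / (- (x + 1)) ^ 2) with (c / (x + 1) ^ 2) by (field; unfold x; lra).
    replace (2 * c * (1 / x - 1 / (x + 1))) with (2 * c / (x * (x + 1))) by (field; unfold x; lra).
    apply Rle_trans with (2 * c / (x + 1) ^ 2); [right; field; unfold x; lra|].
    unfold Rdiv. apply Rmult_le_compat_l; [lra|]. unfold x. apply Rinv_le_contravar; nra. }
  lra.
Qed.

Theorem Anorm_le_of_diff2 g B K : is_cont g -> is_periodic g -> 0 <= K ->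
  (forall t, Cmod (g t) <= B) ->
  (forall t h, 0 < h -> Cmod (diff2 g t h) <= K * h ^ 2) ->
  Anorm_le g (B + K * PI ^ 2).
Proof.
intros Hc Hp HK HB HD L HL.
assert (HB0 : 0 <= B) by (pose proof (HB 0); pose proof (Cmod_ge_0 (g 0)); lra).
set (c := K * PI ^ 2 / 4).
assert (Hc0 : 0 <= c) by (unfold c; pose proof PI_RGT_0; apply Rmult_le_pos; [nra|lra]).
apply Rle_trans with (sumR (coef_majorant B c) L).
{ apply sumR_le. intros n _. unfold coef_majorant. destruct (Z.eq_dec n 0).
  - apply fcoef_bound; auto.
  - eapply Rle_trans. apply (fcoef_bound_diff2 g K n Hc Hp HK HD n0). unfold c. right; field.
    apply not_0_IZR; auto. }
destruct (zball_cover L) as [M HM].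
eapply Rle_trans. apply (sumR_incl _ L (zball (S M)) HL).
{ intros x Hx. apply (zball_mono M); auto. }
{ intros n. unfold coef_majorant. destruct (Z.eq_dec n 0); auto. apply Rmult_le_pos; auto.
  left; apply Rinv_0_lt_compat. rewrite <- Rsqr_pow2. apply Rsqr_pos_lt. apply not_0_IZR; auto. }
eapply Rle_trans. apply sumR_coef_majorant; auto.
pose proof (pos_INR M). assert (0 < 1 / (INR M + 1)) by (apply Rdiv_lt_0_compat; lra).
assert (2 * c * (2 - 1 / (INR M + 1)) <= 4 * c) by nra.
assert (4 * c = K * PI ^ 2) by (unfold c; field). lra.
Qed.

(** * Inverses of non-vanishing trigonometric polynomials *)

Lemma Rabs_sin_le x : Rabs (sin x) <= Rabs x.
Proof.
assert (H : forall y, 0 <= y -> Rabs (sin y) <= y).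
{ intros y Hy. destruct (Req_dec y 0) as [->|Hne]. rewrite sin_0, Rabs_R0; lra.
  pose proof (sin_lt_x y ltac:(lra)). apply Rabs_le. split; [|lra].
  destruct (Rle_lt_dec 1 y). pose proof (SIN_bound y); lra.
  pose proof PI2_3_2. assert (0 <= sin y) by (apply sin_ge_0; lra). lra. }
destruct (Rle_lt_dec 0 x). rewrite (Rabs_right x) by lra. apply H; auto.
rewrite (Rabs_left x) by lra. rewrite <- (Ropp_involutive x) at 1. rewrite sin_neg, Rabs_Ropp.
apply H; lra.
Qed.

Lemma one_minus_cos_le x : 2 - 2 * cos x <= x ^ 2.
Proof.
replace x with (2 * (x / 2)) at 1 by field. rewrite cos_2a_sin.
pose proof (Rsqr_le_abs_1 _ _ (Rabs_sin_le (x / 2))). unfold Rsqr in H. nra.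
Qed.

Lemma Cmod_eit_sub1 u : Cmod (eit u - 1) <= Rabs u.
Proof.
unfold Cmod, eit. simpl. rewrite <- sqrt_Rsqr_abs. apply sqrt_le_1_alt.
pose proof (one_minus_cos_le u). pose proof (sin2_cos2 u). unfold Rsqr in *. nra.
Qed.

Lemma chi_lipschitz j s t : Cmod (chi j s - chi j t) <= Rabs (IZR j) * Rabs (s - t).
Proof.
unfold chi.
replace (eit (IZR j * s) - eit (IZR j * t))%C with (eit (IZR j * t) * (eit (IZR j * (s - t)) - 1))%C.
rewrite Cmod_mult, Cmod_eit, Rmult_1_l, <- Rabs_mult. apply Cmod_eit_sub1.
replace (IZR j * s) with (IZR j * t + IZR j * (s - t)) by ring. rewrite eit_add. ring.
Qed.

Lemma chi_diff2 j t h : Cmod (diff2 (chi j) t h) <= IZR j ^ 2 * h ^ 2.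
Proof.
unfold diff2, chi.
replace (eit (IZR j * (t + h)) - RtoC 2 * eit (IZR j * t) + eit (IZR j * (t - h)))%C
  with (eit (IZR j * t) * RtoC (2 * cos (IZR j * h) - 2))%C.
- rewrite Cmod_mult, Cmod_eit, Rmult_1_l, Cmod_R. pose proof (one_minus_cos_le (IZR j * h)).
  pose proof (COS_bound (IZR j * h)). rewrite Rabs_left1 by lra. rewrite Rpow_mult_distr in H. lra.
- replace (IZR j * (t + h)) with (IZR j * t + IZR j * h) by ring.
  replace (IZR j * (t - h)) with (IZR j * t + - (IZR j * h)) by ring.
  rewrite !eit_add. unfold eit. rewrite cos_neg, sin_neg. apply C_ext; simpl; ring.
Qed.

Definition tnorm1 (T : tpoly) := sumR (fun p => Cmod (fst p) * Rabs (IZR (snd p))) T.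

Definition tnorm2 (T : tpoly) := sumR (fun p => Cmod (fst p) * IZR (snd p) ^ 2) T.

Lemma teval_lipschitz T s t : Cmod (teval T s - teval T t) <= tnorm1 T * Rabs (s - t).
Proof.
unfold teval, tnorm1.
replace (sumC (fun p => fst p * chi (snd p) s) T - sumC (fun p => fst p * chi (snd p) t) T)%C
  with (sumC (fun p => fst p * (chi (snd p) s - chi (snd p) t)) T)%C.
- eapply Rle_trans; [apply Cmod_sumC|]. rewrite Rmult_comm, <- sumR_scal.
  apply sumR_le. intros p _. rewrite Cmod_mult. rewrite <- Rmult_assoc.
  rewrite (Rmult_comm (Rabs (s - t))).
  rewrite Rmult_assoc. apply Rmult_le_compat_l. apply Cmod_ge_0. rewrite Rmult_comm.
  apply chi_lipschitz.
- induction T; simpl. apply C_ext; simpl; ring. rewrite IHT. ring.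
Qed.

Lemma teval_diff2 T t h : Cmod (diff2 (teval T) t h) <= tnorm2 T * h ^ 2.
Proof.
unfold tnorm2.
replace (diff2 (teval T) t h) with (sumC (fun p => fst p * diff2 (chi (snd p)) t h) T)%C.
- eapply Rle_trans; [apply Cmod_sumC|]. rewrite Rmult_comm, <- sumR_scal.
  apply sumR_le. intros p _. rewrite Cmod_mult. pose proof (chi_diff2 (snd p) t h).
  pose proof (Cmod_ge_0 (fst p)). nra.
- unfold diff2, teval. induction T; simpl. apply C_ext; simpl; ring. rewrite IHT. unfold diff2.
  ring.
Qed.

Lemma Cpow_sub_bound (a b : C) r m : 1 <= r -> Cmod a <= r -> Cmod b <= r ->
  Cmod (a ^ m - b ^ m) <= INR m * r ^ m * Cmod (a - b).
Proof.
intros Hr Ha Hb. induction m.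
- simpl. unfold Cminus. rewrite Cplus_opp_r, Cmod_0; lra.
- replace (a ^ S m - b ^ S m)%C with (a * (a ^ m - b ^ m) + (a - b) * b ^ m)%C by (simpl; ring).
  eapply Rle_trans; [apply Cmod_triangle|]. rewrite !Cmod_mult, Cmod_pow.
  pose proof (Cmod_ge_0 a); pose proof (Cmod_ge_0 b); pose proof (Cmod_ge_0 (a - b)); pose proof (Cmod_ge_0 (a ^ m - b ^ m)).
  assert (Hrm : 1 <= r ^ m) by (apply pow_R1_Rle; auto).
  assert (Hbm : Cmod b ^ m <= r ^ m) by (apply pow_incr; auto).
  rewrite S_INR. simpl pow. pose proof (pos_INR m).
  assert (Cmod a * Cmod (a ^ m - b ^ m) <= r * (INR m * r ^ m * Cmod (a - b))) by (apply Rmult_le_compat; auto).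
  assert (Cmod (a - b) * Cmod b ^ m <= Cmod (a - b) * (r * r ^ m)) by (apply Rmult_le_compat_l; nra).
  nra.
Qed.

Lemma Cmod_sub_mul_pow_sub (a b : C) r e m : 1 <= r -> Cmod a <= r -> Cmod b <= r ->
  Cmod (a - b) <= e -> Cmod ((a - b) * (a ^ m - b ^ m)) <= INR m * r ^ S m * e ^ 2.
Proof.
intros Hr Ha Hb He. rewrite Cmod_mult.
pose proof (Cpow_sub_bound a b r m Hr Ha Hb) as Hp.
pose proof (Cmod_ge_0 (a - b)). pose proof (Cmod_ge_0 (a ^ m - b ^ m)).
assert (Hk : 0 <= INR m * r ^ m) by (apply Rmult_le_pos; [apply pos_INR|apply pow_le; lra]).
apply Rle_trans with (e * (INR m * r ^ m * e)).
{ apply Rmult_le_compat; auto. eapply Rle_trans; [exact Hp|]. apply Rmult_le_compat_l; auto. }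
assert (0 <= e * (INR m * r ^ m * e)) by (apply Rmult_le_pos; [lra|apply Rmult_le_pos; lra]).
simpl pow. replace (INR m * (r * r ^ m) * e ^ 2) with (r * (e * (INR m * r ^ m * e))) by ring.
nra.
Qed.

(* Induction on m through the identity
   a^(m+1) - 2 b^(m+1) + c^(m+1) = b (a^m - 2 b^m + c^m) + (a - b)(a^m - b^m)
                                   + (c - b)(c^m - b^m) + (a - 2 b + c) b^m. *)
Lemma Cpow_diff2_bound (a b c : C) r e1 e2 m : 1 <= r ->
  Cmod a <= r -> Cmod b <= r -> Cmod c <= r ->
  Cmod (a - b) <= e1 -> Cmod (c - b) <= e1 -> Cmod (a - RtoC 2 * b + c) <= e2 ->
  Cmod (a ^ m - RtoC 2 * b ^ m + c ^ m) <= INR m * INR m * r ^ m * (e2 + e1 ^ 2).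
Proof.
intros Hr Ha Hb Hc H1 H2 H3.
assert (He2 : 0 <= e2) by (pose proof (Cmod_ge_0 (a - RtoC 2 * b + c)); lra).
induction m as [|m IH].
{ simpl. replace (RtoC 1 - RtoC 2 * RtoC 1 + RtoC 1)%C with (RtoC 0) by (apply C_ext; simpl; ring).
  rewrite Cmod_0. lra. }
replace (a ^ S m - RtoC 2 * b ^ S m + c ^ S m)%C with
  (b * (a ^ m - RtoC 2 * b ^ m + c ^ m) + (a - b) * (a ^ m - b ^ m)
   + (c - b) * (c ^ m - b ^ m) + (a - RtoC 2 * b + c) * b ^ m)%C by (simpl; ring).
set (E := e2 + e1 ^ 2).
assert (Hrm : 1 <= r ^ m) by (apply pow_R1_Rle; auto).
pose proof (pos_INR m) as Hm.
assert (B1 : Cmod (b * (a ^ m - RtoC 2 * b ^ m + c ^ m)) <= r * (INR m * INR m * r ^ m * E)).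
{ rewrite Cmod_mult. apply Rmult_le_compat; [apply Cmod_ge_0|apply Cmod_ge_0|exact Hb|exact IH]. }
pose proof (Cmod_sub_mul_pow_sub a b r e1 m Hr Ha Hb H1) as B2.
pose proof (Cmod_sub_mul_pow_sub c b r e1 m Hr Hc Hb H2) as B3.
assert (B4 : Cmod ((a - RtoC 2 * b + c) * b ^ m) <= e2 * r ^ m).
{ rewrite Cmod_mult, Cmod_pow. apply Rmult_le_compat; auto; try apply Cmod_ge_0.
  apply pow_le, Cmod_ge_0. apply pow_incr. split; auto. apply Cmod_ge_0. }
pose proof (Cmod_triangle (b * (a ^ m - RtoC 2 * b ^ m + c ^ m) + (a - b) * (a ^ m - b ^ m)
  + (c - b) * (c ^ m - b ^ m)) ((a - RtoC 2 * b + c) * b ^ m)).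
pose proof (Cmod_triangle (b * (a ^ m - RtoC 2 * b ^ m + c ^ m) + (a - b) * (a ^ m - b ^ m))
  ((c - b) * (c ^ m - b ^ m))).
pose proof (Cmod_triangle (b * (a ^ m - RtoC 2 * b ^ m + c ^ m)) ((a - b) * (a ^ m - b ^ m))).
assert (Hsq : 0 <= e1 ^ 2) by apply pow2_ge_0.
assert (A1 : 0 <= INR m * (r * r ^ m) * e2) by (apply Rmult_le_pos; [apply Rmult_le_pos|]; nra).
assert (X1 : r ^ m <= r * r ^ m) by nra.
assert (A2 : e2 * r ^ m <= e2 * (r * r ^ m)) by (apply Rmult_le_compat_l; lra).
assert (A3 : 0 <= r * r ^ m * e1 ^ 2) by (apply Rmult_le_pos; nra).
rewrite S_INR. simpl pow in *. unfold E in *. lra.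
Qed.

Lemma Cmod_Cinv_le (z : C) mu r : 0 < mu -> mu <= Cmod z -> / mu <= r -> Cmod (Cinv z) <= r.
Proof.
intros Hmu Hz Hr. assert (z <> 0%C).
{ intro E. rewrite E, Cmod_0 in Hz. lra. }
rewrite Cmod_inv by auto. eapply Rle_trans; [|exact Hr]. apply Rinv_le_contravar; auto.
Qed.

Lemma neq0_of_Cmod_lb (z : C) mu : 0 < mu -> mu <= Cmod z -> z <> 0%C.
Proof. intros Hmu Hz E. rewrite E, Cmod_0 in Hz. lra. Qed.

Definition inv_pow_const (T : tpoly) (r : R) :=
  r ^ 3 * (tnorm T * tnorm2 T + 2 * tnorm1 T ^ 2) + r ^ 4 * tnorm1 T ^ 2.

Lemma tnorm_nonneg T : 0 <= tnorm T.
Proof. apply sumR_nonneg; intros; apply Cmod_ge_0. Qed.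

Lemma tnorm1_nonneg T : 0 <= tnorm1 T.
Proof. apply sumR_nonneg; intros; apply Rmult_le_pos; [apply Cmod_ge_0|apply Rabs_pos]. Qed.

Lemma tnorm2_nonneg T : 0 <= tnorm2 T.
Proof. apply sumR_nonneg; intros; apply Rmult_le_pos; [apply Cmod_ge_0|apply pow2_ge_0]. Qed.

Lemma inv_pow_const_nonneg T r : 0 <= r -> 0 <= inv_pow_const T r.
Proof.
intros Hr. pose proof (tnorm_nonneg T). pose proof (tnorm1_nonneg T). pose proof (tnorm2_nonneg T).
unfold inv_pow_const. apply Rplus_le_le_0_compat; apply Rmult_le_pos; try apply pow_le; nra.
Qed.

Section InverseTrigPoly.

Variables (T : tpoly) (r : R).
Hypothesis teval_neq0 : forall t, teval T t <> 0%C.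
Hypothesis Cmod_inv_teval_le : forall t, Cmod (Cinv (teval T t)) <= r.

Lemma inv_teval_lipschitz s t :
  Cmod (Cinv (teval T s) - Cinv (teval T t)) <= r ^ 2 * tnorm1 T * Rabs (s - t).
Proof.
replace (Cinv (teval T s) - Cinv (teval T t))%C
  with ((teval T t - teval T s) * Cinv (teval T s) * Cinv (teval T t))%C by (field; split; auto).
rewrite !Cmod_mult. pose proof (teval_lipschitz T t s) as H. rewrite Rabs_minus_sym in H.
pose proof (Cmod_inv_teval_le s); pose proof (Cmod_inv_teval_le t).
pose proof (Cmod_ge_0 (teval T t - teval T s)).
pose proof (Cmod_ge_0 (Cinv (teval T s))). pose proof (Cmod_ge_0 (Cinv (teval T t))).
replace (r ^ 2 * tnorm1 T * Rabs (s - t)) with (tnorm1 T * Rabs (s - t) * r * r) by ring.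
repeat apply Rmult_le_compat; auto; nra.
Qed.

(* 1/p - 2/q + 1/s = - (q (p - 2q + s) + 2 (p - q)(s - q)) / (p q s). *)
Lemma inv_teval_diff2 t h : 0 < h ->
  Cmod (diff2 (fun t => Cinv (teval T t)) t h)
  <= r ^ 3 * (tnorm T * tnorm2 T + 2 * tnorm1 T ^ 2) * h ^ 2.
Proof.
intros Hh. unfold diff2.
set (p := teval T (t + h)). set (q := teval T t). set (s := teval T (t - h)).
replace (Cinv p - RtoC 2 * Cinv q + Cinv s)%C
  with (- (q * (p - RtoC 2 * q + s) + RtoC 2 * (p - q) * (s - q)) * Cinv p * Cinv q * Cinv s)%C
  by (field; repeat split; unfold p, q, s; auto).
rewrite !Cmod_mult, Cmod_opp.
set (K := tnorm T * tnorm2 T + 2 * tnorm1 T ^ 2).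
assert (Hn : Cmod (q * (p - RtoC 2 * q + s) + RtoC 2 * (p - q) * (s - q)) <= K * h ^ 2).
{ eapply Rle_trans; [apply Cmod_triangle|]. rewrite !Cmod_mult, Cmod_R, Rabs_right by lra.
  pose proof (Cmod_teval_le T t) as Bq.
  pose proof (teval_diff2 T t h) as Bd. unfold diff2 in Bd.
  pose proof (teval_lipschitz T (t + h) t) as Bp.
  replace (t + h - t) with h in Bp by ring. rewrite Rabs_right in Bp by lra.
  pose proof (teval_lipschitz T (t - h) t) as Bs.
  replace (t - h - t) with (- h) in Bs by ring. rewrite Rabs_Ropp, Rabs_right in Bs by lra.
  fold p q s in Bq, Bd, Bp, Bs.
  pose proof (Cmod_ge_0 q). pose proof (Cmod_ge_0 (p - q)). pose proof (Cmod_ge_0 (s - q)).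
  pose proof (Cmod_ge_0 (p - RtoC 2 * q + s)).
  assert (Cmod q * Cmod (p - RtoC 2 * q + s) <= tnorm T * (tnorm2 T * h ^ 2))
    by (apply Rmult_le_compat; auto).
  assert (Cmod (p - q) * Cmod (s - q) <= (tnorm1 T * h) * (tnorm1 T * h))
    by (apply Rmult_le_compat; auto).
  unfold K. nra. }
pose proof (Cmod_inv_teval_le (t + h)) as Hp; pose proof (Cmod_inv_teval_le t) as Hq.
pose proof (Cmod_inv_teval_le (t - h)) as Hs. fold p in Hp. fold q in Hq. fold s in Hs.
pose proof (Cmod_ge_0 (Cinv p)); pose proof (Cmod_ge_0 (Cinv q)); pose proof (Cmod_ge_0 (Cinv s)).
pose proof (Cmod_ge_0 (q * (p - RtoC 2 * q + s) + RtoC 2 * (p - q) * (s - q))).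
replace (r ^ 3 * K * h ^ 2) with (K * h ^ 2 * r * r * r) by ring.
repeat apply Rmult_le_compat; auto; repeat apply Rmult_le_pos; auto.
Qed.

(* The powers of 1/P are smooth with a second-difference constant growing only
   like m^2 r^m, hence so does their Wiener norm. *)
Theorem Anorm_le_inv_teval_pow m : 1 <= r ->
  Anorm_le (fun t => (Cinv (teval T t)) ^ m)%C
    (r ^ m + INR m * INR m * r ^ m * (inv_pow_const T r * PI ^ 2)).
Proof.
intros Hr.
pose proof (inv_pow_const_nonneg T r ltac:(lra)).
replace (INR m * INR m * r ^ m * (inv_pow_const T r * PI ^ 2))
  with (INR m * INR m * r ^ m * inv_pow_const T r * PI ^ 2) by ring.
apply Anorm_le_of_diff2.
- intros t. apply continuous_Cpow, continuous_Cinv; auto. apply is_cont_teval.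
- intros t. rewrite is_periodic_teval. auto.
- pose proof (pos_INR m). repeat apply Rmult_le_pos; try apply pow_le; lra.
- intros t. rewrite Cmod_pow. apply pow_incr. split; [apply Cmod_ge_0|auto].
- intros t h Hh.
  assert (Hab : Cmod (Cinv (teval T (t + h)) - Cinv (teval T t)) <= r ^ 2 * tnorm1 T * h).
  { pose proof (inv_teval_lipschitz (t + h) t). replace (t + h - t) with h in H0 by ring.
    rewrite Rabs_right in H0 by lra. exact H0. }
  assert (Hcb : Cmod (Cinv (teval T (t - h)) - Cinv (teval T t)) <= r ^ 2 * tnorm1 T * h).
  { pose proof (inv_teval_lipschitz (t - h) t). replace (t - h - t) with (- h) in H0 by ring.
    rewrite Rabs_Ropp, Rabs_right in H0 by lra. exact H0. }
  eapply Rle_trans.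
  { apply (Cpow_diff2_bound _ _ _ r _ _ m Hr (Cmod_inv_teval_le _) (Cmod_inv_teval_le _)
      (Cmod_inv_teval_le _) Hab Hcb (inv_teval_diff2 t h Hh)). }
  right. unfold inv_pow_const. ring.
Qed.

End InverseTrigPoly.

(** * Wiener's lemma *)

Lemma Anorm_le_opp f M : is_cont f -> Anorm_le f M -> Anorm_le (fun t => - f t)%C M.
Proof.
intros Hc HA L HL. rewrite (sumR_ext _ (fun n => Cmod (fcoef f n))). apply HA; auto.
intros n. rewrite fcoef_opp by auto. apply Cmod_opp.
Qed.

Lemma is_cont_pow f k : is_cont f -> is_cont (fun t => f t ^ k)%C.
Proof. intros H t. apply continuous_Cpow, H. Qed.

Lemma is_periodic_pow f k : is_periodic f -> is_periodic (fun t => f t ^ k)%C.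
Proof. intros H t. rewrite H. auto. Qed.

Lemma Anorm_le_ext f g M : (forall t, f t = g t) -> Anorm_le f M -> Anorm_le g M.
Proof.
intros E HA L HL. rewrite (sumR_ext _ (fun n => Cmod (fcoef f n))). apply HA; auto.
intros n. rewrite (fcoef_ext f g); auto.
Qed.

Lemma sumR_indicator0_out L : ~ In 0%Z L ->
  sumR (fun n => Cmod (if Z.eq_dec 0 n then 1%C else 0%C)) L = 0.
Proof.
induction L as [|a L IH]; intros H; [reflexivity|]. cbn [sumR]. destruct (Z.eq_dec 0 a).
subst; simpl in H; tauto.
rewrite IH by (simpl in H; tauto). rewrite Cmod_0; ring.
Qed.

Lemma sumR_indicator0 L : NoDup L ->
  sumR (fun n => Cmod (if Z.eq_dec 0 n then 1%C else 0%C)) L <= 1.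
Proof.
induction 1; cbn [sumR]. lra. destruct (Z.eq_dec 0 x).
- subst. rewrite sumR_indicator0_out by auto. rewrite Cmod_1; lra.
- rewrite Cmod_0. lra.
Qed.

Lemma Anorm_le_one : Anorm_le (fun _ => 1%C) 1.
Proof.
intros L HL. rewrite (sumR_ext _ (fun n => Cmod (if Z.eq_dec 0 n then 1%C else 0%C))).
apply sumR_indicator0; auto. intros n; rewrite fcoef_const1; auto.
Qed.

Lemma Anorm_le_pow f M k : is_cont f -> is_periodic f -> Anorm_le f M ->
  Anorm_le (fun t => f t ^ k)%C (M ^ k).
Proof.
intros Hc Hp HA. induction k.
- simpl. apply Anorm_le_one.
- simpl. apply (Anorm_le_mul f (fun t => f t ^ k)%C M (M ^ k)); auto. apply is_cont_pow; auto.
Qed.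


Lemma sumR_geom_half K : sumR (fun k => (1/2) ^ k) (seq 0 K) = 2 - 2 * (1/2) ^ K.
Proof.
induction K. simpl; ring. rewrite seq_S, sumR_app, IHK. cbn [sumR]. rewrite Nat.add_0_l.
rewrite <- tech_pow_Rmult. set (X := (1/2)^K). lra.
Qed.

Lemma sq_le_pow2 k : (INR k + 1) ^ 2 <= 4 * 2 ^ k.
Proof.
assert (Aux : forall k, 2 * INR k + 3 <= 4 * 2 ^ k).
{ induction k0. simpl; lra. rewrite S_INR. pose proof (pos_INR k0). simpl. lra. }
induction k. simpl; lra. rewrite S_INR. specialize (Aux k). simpl in *. nra.
Qed.

Lemma sumC_geom (D Q : C) K :
  (sumC (fun k => D ^ k * Q ^ (S k)) (seq 0 K) * (1 - D * Q) = Q * (1 - (D * Q) ^ K))%C.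
Proof.
induction K. simpl. apply C_ext; simpl; ring.
rewrite seq_S, sumC_app. cbn [sumC]. rewrite Nat.add_0_l.
replace ((sumC (fun k : nat => D ^ k * Q ^ S k) (seq 0 K) + (D ^ K * Q ^ S K + 0)) * (1 - D * Q))%C
  with (sumC (fun k : nat => D ^ k * Q ^ S k) (seq 0 K) * (1 - D * Q) + D ^ K * Q ^ S K * (1 - D * Q))%C by ring.
rewrite IHK, !Cpow_mult_l. simpl. ring.
Qed.

Lemma Cmod_sub_sym (a b : C) : Cmod (a - b) = Cmod (b - a).
Proof. replace (a - b)%C with (- (b - a))%C by ring. apply Cmod_opp. Qed.

(* 1 / (P - D) = (1/P) / (1 - D/P) = sum_k D^k (1/P)^(k+1). *)
Lemma Cinv_neumann_bound (P D : C) K : P <> 0%C -> Cmod (D * Cinv P) <= 1/4 ->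
  Cmod (Cinv (P - D) - sumC (fun k => D ^ k * Cinv P ^ S k)%C (seq 0 K))
  <= 4/3 * Cmod (Cinv P) * (1/4) ^ K.
Proof.
intros HP Hz. set (Q := Cinv P) in *. set (z := (D * Q)%C) in *.
assert (H1z : 3/4 <= Cmod (1 - z)).
{ pose proof (Cmod_triangle (1 - z) z). replace (1 - z + z)%C with (RtoC 1) in H by ring.
  rewrite Cmod_1 in H. lra. }
assert (H1zn : (1 - z)%C <> 0%C) by (apply (neq0_of_Cmod_lb _ (3/4)); auto; lra).
assert (ES : sumC (fun k => D ^ k * Q ^ S k)%C (seq 0 K) = (Q * (1 - z ^ K) * Cinv (1 - z))%C).
{ pose proof (sumC_geom D Q K) as G. fold z in G. rewrite <- G. field. auto. }
rewrite ES.
assert (EP : (P - D)%C = (P * (1 - z))%C) by (unfold z, Q; field; auto).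
rewrite EP.
replace (Cinv (P * (1 - z)) - Q * (1 - z ^ K) * Cinv (1 - z))%C with (Q * z ^ K * Cinv (1 - z))%C
  by (unfold Q; field; split; auto).
rewrite !Cmod_mult, Cmod_pow, (Cmod_inv (1 - z)) by auto.
assert (Cmod z ^ K <= (1/4) ^ K) by (apply pow_incr; split; [apply Cmod_ge_0|auto]).
assert (/ Cmod (1 - z) <= 4/3) by (replace (4/3) with (/ (3/4)) by field; apply Rinv_le_contravar; lra).
assert (0 <= Cmod z ^ K) by (apply pow_le, Cmod_ge_0).
assert (0 <= / Cmod (1 - z)) by (left; apply Rinv_0_lt_compat; lra).
pose proof (Cmod_ge_0 Q).
replace (4/3 * Cmod Q * (1/4) ^ K) with (Cmod Q * (1/4) ^ K * (4/3)) by ring.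
apply Rmult_le_compat; auto; [apply Rmult_le_pos; auto|]. apply Rmult_le_compat_l; auto.
Qed.

Lemma neumann_coef_bound d r c k : 0 <= r -> d * r = 1/4 -> 0 <= c ->
  d ^ k * (r ^ S k + INR (S k) * INR (S k) * r ^ S k * c) <= r * (1 + 4 * c) * (1/2) ^ k.
Proof.
intros Hr Hdr Hc.
replace (d ^ k * (r ^ S k + INR (S k) * INR (S k) * r ^ S k * c))
  with (r * (d * r) ^ k * (1 + INR (S k) ^ 2 * c)) by (rewrite Rpow_mult_distr; simpl; ring).
rewrite Hdr, S_INR. pose proof (sq_le_pow2 k).
assert (H2k : 1 <= 2 ^ k) by (apply pow_R1_Rle; lra).
assert (E : (1/4) ^ k * 2 ^ k = (1/2) ^ k) by (rewrite <- Rpow_mult_distr; f_equal; field).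
assert (0 < (1/4) ^ k) by (apply pow_lt; lra).
assert (1 + (INR k + 1) ^ 2 * c <= 2 ^ k * (1 + 4 * c)) by nra.
apply Rle_trans with (r * (1/4) ^ k * (2 ^ k * (1 + 4 * c))).
- apply Rmult_le_compat_l; [apply Rmult_le_pos; lra|auto].
- rewrite <- E. right; ring.
Qed.

Lemma trig_poly_approx F M d : is_cont F -> is_periodic F -> Anorm_le F M -> 0 < d ->
  exists T, Anorm_le (fun t => teval T t - F t)%C d /\ forall t, Cmod (teval T t - F t) <= d.
Proof.
intros Hc Hp HA Hd.
destruct (Anorm_le_sub_fpartial F M Hc HA d Hd) as [N1 H1].
destruct (fpartial_uniform_cvg F M Hc Hp HA d Hd) as [N2 H2].
set (N := Nat.max N1 N2). exists (fpartial F N). split.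
- apply (Anorm_le_ext (fun t => - (F t - teval (fpartial F N) t))%C); [intros t; ring|].
  apply Anorm_le_opp; [apply is_cont_minus; auto; apply is_cont_teval|]. apply H1; unfold N; lia.
- intros t. rewrite Cmod_sub_sym. apply H2. unfold N; lia.
Qed.

Theorem wiener_inverse F M mu : is_cont F -> is_periodic F -> Anorm_le F M -> 0 < mu ->
  (forall t, mu <= Cmod (F t)) -> exists B, Anorm_le (fun t => Cinv (F t)) B.
Proof.
intros Hc Hp HA Hmu HF.
set (r := Rmax 1 (2 / mu)).
assert (Hr1 : 1 <= r) by apply Rmax_l. assert (Hr2 : 2 / mu <= r) by apply Rmax_r.
set (d := / (4 * r)).
assert (Hd : 0 < d) by (unfold d; apply Rinv_0_lt_compat; lra).
assert (Hdr : d * r = 1/4) by (unfold d; field; lra).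
assert (Hdmu : d <= mu / 8).
{ apply Rle_trans with (/ (4 * (2 / mu))); [|right; field; lra].
  apply Rinv_le_contravar; [apply Rmult_lt_0_compat; [lra|apply Rdiv_lt_0_compat; lra]|lra]. }
destruct (trig_poly_approx F M d Hc Hp HA Hd) as [T [HAD HDd]].
set (P := teval T). set (D := fun t => (P t - F t)%C).
change (Anorm_le D d) in HAD. change (forall t, Cmod (D t) <= d) in HDd.
assert (HPmu : forall t, mu / 2 <= Cmod (P t)).
{ intros t. pose proof (HF t). pose proof (HDd t) as HD; unfold D in HD.
  pose proof (Cmod_triangle (P t) (- (P t - F t))) as Htri. rewrite Cmod_opp in Htri.
  replace (P t + - (P t - F t))%C with (F t) in Htri by ring. lra. }
assert (HPn : forall t, P t <> 0%C) by (intros t; apply (neq0_of_Cmod_lb _ (mu/2)); auto; lra).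
assert (HQr : forall t, Cmod (Cinv (P t)) <= r).
{ intros t. apply (Cmod_Cinv_le _ (mu/2)); auto; [lra|]. replace (/ (mu / 2)) with (2 / mu) by (field; lra). auto. }
assert (HcD : is_cont D) by (apply is_cont_minus; auto; apply is_cont_teval).
assert (HpD : is_periodic D) by (apply is_periodic_minus; auto; apply is_periodic_teval).
set (h := fun k t => (D t ^ k * Cinv (P t) ^ S k)%C).
set (c := inv_pow_const T r * PI ^ 2).
assert (Hc0 : 0 <= c) by (apply Rmult_le_pos; [apply inv_pow_const_nonneg; lra|apply pow2_ge_0]).
set (b := fun k => d ^ k * (r ^ S k + INR (S k) * INR (S k) * r ^ S k * c)).
assert (HAh : forall k, Anorm_le (h k) (b k)).
{ intros k. apply (Anorm_le_mul (fun t => D t ^ k)%C (fun t => Cinv (P t) ^ S k)%C).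
  - apply is_cont_pow; auto.
  - apply is_periodic_pow; auto.
  - apply Anorm_le_pow; auto.
  - intros t. apply continuous_Cpow, continuous_Cinv; auto. apply is_cont_teval.
  - apply Anorm_le_inv_teval_pow; auto. }
set (Bc := r * (1 + 4 * c)).
assert (HB : forall K, sumR b (seq 0 K) <= 2 * Bc).
{ intros K. apply Rle_trans with (sumR (fun k => Bc * (1/2) ^ k) (seq 0 K)).
  - apply sumR_le; intros k _. apply neumann_coef_bound; lra.
  - rewrite sumR_scal, sumR_geom_half. assert (0 <= Bc) by (unfold Bc; apply Rmult_le_pos; lra).
    assert (0 < (1/2) ^ K) by (apply pow_lt; lra). nra. }
exists (2 * Bc). apply (Anorm_le_uniform_limit h (fun t => Cinv (F t)) b (2 * Bc)); auto.
- intros k t. apply continuous_Cmult; apply continuous_Cpow; auto.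
  apply continuous_Cinv; auto. apply is_cont_teval.
- intros t. apply continuous_Cinv; auto. intro E. pose proof (HF t). rewrite E, Cmod_0 in H. lra.
- intros eps He.
  destruct (pow_lt_1_zero (1/4) ltac:(rewrite Rabs_right; lra) (eps / (2 * r))
    ltac:(apply Rdiv_lt_0_compat; lra)) as [K HK].
  exists K. intros t _. specialize (HK K (Nat.le_refl _)).
  rewrite Rabs_right in HK by (apply Rle_ge, pow_le; lra).
  replace (F t) with (P t - D t)%C by (unfold D; ring).
  eapply Rle_trans; [apply Cinv_neumann_bound; auto|].
  + rewrite Cmod_mult, <- Hdr. apply Rmult_le_compat; auto; apply Cmod_ge_0.
  + assert (r * (1/4) ^ K < eps / 2).
    { apply Rmult_lt_reg_l with (/ r); [apply Rinv_0_lt_compat; lra|].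
      replace (/ r * (r * (1/4) ^ K)) with ((1/4) ^ K) by (field; lra).
      replace (/ r * (eps / 2)) with (eps / (2 * r)) by (field; lra). auto. }
    assert (0 <= (1/4) ^ K) by (apply pow_le; lra).
    pose proof (HQr t). nra.
Qed.

(** * Functions on the unit circle and weights *)

Lemma sum_n_sumR (a : nat -> R) K : sum_n a K = sumR a (seq 0 (S K)).
Proof.
induction K. rewrite sum_O. simpl. ring.
rewrite sum_Sn, IHK. rewrite (seq_S (S K)), sumR_app. simpl. unfold plus; simpl. ring.
Qed.

Lemma ex_series_bounded (a : nat -> R) B : (forall n, 0 <= a n) -> (forall K, sum_n a K <= B) ->
  ex_series a.
Proof.
intros Hp HB. destruct (ex_finite_lim_seq_incr (sum_n a) B) as [l Hl]; auto.
intros n. rewrite sum_Sn. unfold plus; simpl. pose proof (Hp (S n)). lra.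
exists l. exact Hl.
Qed.

Lemma series_partial_le (a : nat -> R) l K : is_series a l -> (forall n, 0 <= a n) ->
  sum_n a K <= l.
Proof.
intros Hs Hp. apply (is_lim_seq_incr_compare (sum_n a) l). exact Hs.
intros n. rewrite sum_Sn. unfold plus; simpl. pose proof (Hp (S n)). lra.
Qed.

Lemma sumR_zball_sum_n (phi : Z -> R) K : sumR phi (zball K) =
  sum_n (fun k => phi (Z.of_nat k)) K + sum_n (fun k => phi (- Z.of_nat (S k))%Z) K - phi (- Z.of_nat (S K))%Z.
Proof.
induction K.
- rewrite !sum_O. simpl. ring.
- rewrite sumR_zball_S, IHK, !sum_Sn. unfold plus; simpl. ring.
Qed.

Lemma is_periodic_reduce g : is_periodic g -> forall t, exists s, -PI <= s <= PI /\ g t = g s.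
Proof.
intros Hp t. pose proof PI_RGT_0.
set (x := (t + PI) / (2 * PI)). destruct (archimed x) as [A1 A2].
set (n := (up x - 1)%Z). exists (t - IZR n * (2 * PI)).
assert (Hn : IZR n <= x < IZR n + 1) by (unfold n; rewrite minus_IZR; lra).
assert (Ht : t + PI = x * (2 * PI)) by (unfold x; field; lra).
split. nra.
rewrite <- (is_periodic_mult g Hp n (t - IZR n * (2 * PI))). f_equal; ring.
Qed.

Lemma Gamma_eit t : Gamma (eit t).
Proof. unfold Gamma. apply Cmod_eit. Qed.

Lemma is_cont_on_circle f : continuous_on_Gamma f -> is_cont (fun t => f (eit t)).
Proof.
intros Hf t. unfold continuous.
apply (filterlim_comp _ _ _ eit f (locally t) (within Gamma (locally (eit t)))).
- intros P HP. unfold within in HP.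
  pose proof (continuous_eit (fun s => s) t (continuous_id t) _ HP) as H. unfold filtermap in H.
  unfold filtermap. revert H. apply filter_imp. intros s Hs. apply Hs. apply Gamma_eit.
- apply Hf. apply Gamma_eit.
Qed.

Lemma is_periodic_on_circle f : is_periodic (fun t => f (eit t)).
Proof. intros t. rewrite eit_2PI. auto. Qed.

Lemma Anorm_le_of_w_abs_conv omega f : (forall n, 1 <= omega n) -> w_abs_conv omega f ->
  exists M, Anorm_le (fun t => f (eit t)) M.
Proof.
intros Hw [[lp Hlp] [ln Hln]]. exists (lp + ln). intros L HL.
set (phi := fun n => Cmod (fourier_coeff f n) * omega n).
assert (Hphi : forall n, 0 <= phi n).
{ intros n. unfold phi. pose proof (Hw n). pose proof (Cmod_ge_0 (fourier_coeff f n)). nra. }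
destruct (zball_cover L) as [K HK].
eapply Rle_trans. apply (sumR_incl _ L (zball K) HL HK). intros; apply Cmod_ge_0.
apply Rle_trans with (sumR phi (zball K)).
{ apply sumR_le. intros n _. unfold phi.
  change (fcoef (fun t => f (eit t)) n) with (fourier_coeff f n).
  pose proof (Hw n); pose proof (Cmod_ge_0 (fourier_coeff f n)); nra. }
rewrite sumR_zball_sum_n.
pose proof (series_partial_le _ _ K Hlp (fun k => Hphi _)).
pose proof (series_partial_le _ _ K Hln (fun k => Hphi _)).
pose proof (Hphi (- Z.of_nat (S K))%Z). unfold phi in *. lra.
Qed.

Lemma Cmod_on_circle_lb f : continuous_on_Gamma f -> (forall z, Gamma z -> f z <> 0%C) ->
  exists mu, 0 < mu /\ forall t, mu <= Cmod (f (eit t)).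
Proof.
intros Hc Hnz. set (F := fun t => f (eit t)). pose proof PI_RGT_0.
pose proof (is_cont_on_circle f Hc) as HcF. fold F in HcF.
set (g := fun t => fst (F t) ^ 2 + snd (F t) ^ 2).
assert (Hg : forall t, continuous g t) by (intros t; apply continuous_Csqnorm, HcF).
destruct (continuity_ab_min g (-PI) PI ltac:(lra)) as [tm [Htm Htm']].
{ intros c _. apply continuity_pt_filterlim. apply Hg. }
assert (Hg0 : 0 < g tm).
{ unfold g. assert (F tm <> 0%C) by (apply Hnz, Gamma_eit). destruct (F tm) as [a b]. simpl.
  assert (a <> 0 \/ b <> 0).
  { destruct (Req_dec a 0), (Req_dec b 0); auto. subst. exfalso. apply H0. reflexivity. }
  destruct H1; nra. }
exists (sqrt (g tm)). split. apply sqrt_lt_R0; auto.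
intros t. destruct (is_periodic_reduce F (is_periodic_on_circle f) t) as [s [Hs E]].
change (f (eit t)) with (F t). rewrite E.
unfold Cmod. apply sqrt_le_1_alt. apply (Htm s Hs).
Qed.

Lemma NoDup_map_inj {A B} (f : A -> B) (l : list A) : (forall x y, f x = f y -> x = y) ->
  NoDup l -> NoDup (map f l).
Proof.
intros Hi. induction 1; simpl; constructor; auto.
intros Hin. apply in_map_iff in Hin. destruct Hin as [y [E Hy]]. apply Hi in E.
subst; contradiction.
Qed.

Lemma ex_series_of_Anorm (G : R -> C) B (nu : Z -> R) c (idx : nat -> Z) :
  Anorm_le G B -> (forall n, 0 <= nu n <= c) -> (forall k l, idx k = idx l -> k = l) ->
  ex_series (fun k => Cmod (fcoef G (idx k)) * nu (idx k)).
Proof.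
intros HA Hnu Hinj. assert (Hc : 0 <= c) by (pose proof (Hnu 0%Z); lra).
apply (ex_series_bounded _ (c * B)).
- intros k. pose proof (Hnu (idx k)). pose proof (Cmod_ge_0 (fcoef G (idx k))). nra.
- intros K. rewrite sum_n_sumR.
  apply Rle_trans with (c * sumR (fun k => Cmod (fcoef G (idx k))) (seq 0 (S K))).
  + rewrite <- sumR_scal. apply sumR_le. intros k _.
    pose proof (Hnu (idx k)). pose proof (Cmod_ge_0 (fcoef G (idx k))). nra.
  + rewrite <- (sumR_map (fun n => Cmod (fcoef G n))). apply Rmult_le_compat_l; auto.
    apply HA, NoDup_map_inj, seq_NoDup; auto.
Qed.

Lemma w_abs_conv_of_Anorm (G : R -> C) B (nu : Z -> R) c : Anorm_le G B ->
  (forall n, 0 <= nu n <= c) -> Z_summable (fun n => Cmod (fcoef G n) * nu n).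
Proof.
intros HA Hnu. split.
- apply (ex_series_of_Anorm G B nu c Z.of_nat); auto. intros; lia.
- apply (ex_series_of_Anorm G B nu c (fun k => (- Z.of_nat (S k))%Z)); auto. intros; lia.
Qed.

Lemma is_weight_Rmin w c : is_weight w -> 1 <= c -> is_weight (fun n => Rmin (w n) c).
Proof.
intros [Hw1 Hw2] Hc. split.
- intros k. apply Rmin_glb; auto.
- intros a b.
  pose proof (Hw1 a); pose proof (Hw1 b); pose proof (Hw2 a b); pose proof (Hw1 (a + b)%Z).
  unfold Rmin. destruct (Rle_dec (w (a + b)%Z) c), (Rle_dec (w a) c), (Rle_dec (w b) c); nra.
Qed.

Lemma bounded_weight_below omega : is_weight omega ->
  exists nu c, is_weight nu /\ (forall n, 0 <= nu n <= c) /\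
    (nonconstant nu <-> nonconstant omega) /\ (forall n, nu n <= omega n).
Proof.
intros Hw. pose proof (proj1 Hw) as Hw1.
destruct (classic (nonconstant omega)) as [[m [n Hmn]]|Hnc].
- set (c := Rmax (omega m) (omega n)).
  assert (Hc : 1 <= c) by (pose proof (Hw1 m); pose proof (Rmax_l (omega m) (omega n)); unfold c; lra).
  exists (fun k => Rmin (omega k) c), c. split; [|split; [|split]].
  + apply is_weight_Rmin; auto.
  + intros k. pose proof (Hw1 k). split; [apply Rmin_glb; lra|apply Rmin_r].
  + split; intros _; [exists m, n; auto|].
    exists m, n. rewrite !Rmin_left; auto; [apply Rmax_r|apply Rmax_l].
  + intros k. apply Rmin_l.
- assert (Hconst : forall k, omega k = omega 0%Z).
  { intros k. destruct (Req_dec (omega k) (omega 0%Z)); auto. exfalso. apply Hnc. exists k, 0%Z. auto. }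
  exists omega, (omega 0%Z). split; [auto|split; [|split]].
  + intros k. rewrite Hconst. pose proof (Hw1 0%Z). lra.
  + tauto.
  + intros; lra.
Qed.

Theorem mainTheorem1 (omega : Z -> R) (f : C -> C) :
  is_weight omega ->
  continuous_on_Gamma f ->
  w_abs_conv omega f ->
  (forall z, Gamma z -> f z <> 0%C) ->
  exists nu : Z -> R,
    is_weight nu /\
    w_abs_conv nu (fun z => Cinv (f z)) /\
    (nonconstant nu <-> nonconstant omega) /\
    (forall n, nu n <= omega n).
Proof.
intros Hw Hc Hconv Hnz.
destruct (Anorm_le_of_w_abs_conv omega f (proj1 Hw) Hconv) as [M HM].
destruct (Cmod_on_circle_lb f Hc Hnz) as [mu [Hmu Hmin]].
destruct (wiener_inverse (fun t => f (eit t)) M mu (is_cont_on_circle f Hc)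
  (is_periodic_on_circle f) HM Hmu Hmin) as [B HB].
destruct (bounded_weight_below omega Hw) as [nu [c [Hnu [Hbd [Hnc Hle]]]]].
exists nu. split; [exact Hnu|split; [|split; [exact Hnc|exact Hle]]].
exact (w_abs_conv_of_Anorm (fun t => Cinv (f (eit t))) B nu c HB Hbd).
Qed.
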